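(* There is $N$ such that for every integer $n_0\ge N$ there exist a real $2\times2$ matrix function $A$ on $\mathbb{T}^2\times\mathbb{R}^+$ in the regularity class $R(80,60)$ and a non-zero, uniformly $C^2$ real function $u$ on $\mathbb{T}^2\times\mathbb{R}^+$ with $\ddot u+\operatorname{div}(A\nabla u)=0$, and constants $c,C>0$ (depending on $n_0$) with $\sup_{\mathbb{T}^2\times\{t\ge T\}}|u|\le Ce^{-ce^{cT}}$ for all sufficiently large $T$. More precisely, there is an increasing sequence $t_n\ge0$ with $t_1=0$, $t_{n+1}-t_n>\frac3{100}$, $t_n\to\infty$, and a sequence of positive numbers $c_n$ with $c_1=1$, such that, with $k_n=2^{n+n_0-1}$: for odd $n$, on $\mathbb{T}^2\times[t_n,t_{n+1}]$ one has $u=f_n(t)\cos(k_nx)+g_{n+1}(t)\cos(k_{n+1}y)$ with $f_n,g_{n+1}$ uniformly $C^2$ on $\mathbb{R}^+$; on $\mathbb{T}^2\times[t_n,t_n+\frac1{100}]$, $u=c_n\cos(k_nx)e^{-k_nt}$ and $A=\mathrm{Id}$; on $\mathbb{T}^2\times[t_{n+1}-\frac1{100},t_{n+1}]$, $u=c_{n+1}\cos(k_{n+1}y)e^{-k_{n+1}t}$ and $A=\mathrm{Id}$; for even $n$ the same holds with the roles of $x$ and $y$ exchanged.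
   Context: $\mathbb{T}^2=(\mathbb{R}/2\pi\mathbb{Z})^2$ with coordinates $(x,y)$; $t\ge0$ the third coordinate. $\ddot u+\operatorname{div}(A\nabla u)$ means $\partial_t^2u+\sum_{i,j\in\{x,y\}}\partial_i(A_{ij}\partial_ju)$. Regularity class $R(\Lambda,C)$: $\Lambda^{-1}|\xi|^2\le\xi^TA\xi\le\Lambda|\xi|^2$ for all $\xi\in\mathbb{R}^2$ at every point, and the entries of $A$ are $C^1$ with all first partial derivatives in $x,y,t$ bounded by $C$ in absolute value. Uniformly $C^2$: all partial derivatives of order $\le2$ continuous and bounded. *)

From Stdlib Require Import Reals Lra.
From Coquelicot Require Import Coquelicot.
Open Scope R_scope.

(** Functions on T^2 x R^+ are represented as f : R -> R -> R -> R
    (arguments x y t), required to be 2*pi-periodic in x and y. *)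
Definition fun3 := R -> R -> R -> R.

Inductive coord := CX | CY.
Inductive dir := DX | DY | DT.

Definition dir_of (c : coord) : dir := match c with CX => DX | CY => DY end.

Definition pd (d : dir) (f : fun3) : fun3 :=
  fun x y t => match d with
  | DX => Derive (fun s => f s y t) x
  | DY => Derive (fun s => f x s t) y
  | DT => Derive (fun s => f x y s) t
  end.

Definition pdex (d : dir) (f : fun3) (x y t : R) : Prop :=
  match d with
  | DX => ex_derive (fun s => f s y t) x
  | DY => ex_derive (fun s => f x s t) y
  | DT => ex_derive (fun s => f x y s) t
  end.

Definition cont3 (f : fun3) (x y t : R) : Prop :=
  forall eps, 0 < eps -> exists delta, 0 < delta /\
    forall x' y' t', Rabs (x' - x) < delta -> Rabs (y' - y) < delta ->
      Rabs (t' - t) < delta -> Rabs (f x' y' t' - f x y t) < eps.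

Definition periodic_xy (f : fun3) : Prop :=
  forall x y t, f (x + 2 * PI) y t = f x y t /\ f x (y + 2 * PI) t = f x y t.

Definition uniformly_C2 (f : fun3) : Prop :=
  (forall x y t, 0 < t ->
     (forall d, pdex d f x y t) /\
     (forall d1 d2, pdex d2 (pd d1 f) x y t) /\
     cont3 f x y t /\
     (forall d, cont3 (pd d f) x y t) /\
     (forall d1 d2, cont3 (pd d2 (pd d1 f)) x y t)) /\
  exists M, forall x y t, 0 < t ->
     Rabs (f x y t) <= M /\
     (forall d, Rabs (pd d f x y t) <= M) /\
     (forall d1 d2, Rabs (pd d2 (pd d1 f) x y t) <= M).

Definition uniformly_C2_1 (f : R -> R) : Prop :=
  (forall t, 0 < t ->
     ex_derive f t /\ ex_derive (Derive f) t /\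
     continuity_pt f t /\ continuity_pt (Derive f) t /\
     continuity_pt (Derive (Derive f)) t) /\
  exists M, forall t, 0 < t ->
     Rabs (f t) <= M /\ Rabs (Derive f t) <= M /\
     Rabs (Derive (Derive f) t) <= M.

Definition matfun := coord -> coord -> fun3.

Definition coord_sum (F : coord -> R) : R := F CX + F CY.

Definition quadform (A : matfun) (x y t : R) (xi : coord -> R) : R :=
  coord_sum (fun i => coord_sum (fun j => xi i * A i j x y t * xi j)).

Definition sqnorm (xi : coord -> R) : R := coord_sum (fun i => xi i * xi i).

Definition reg_class (Lam C : R) (A : matfun) : Prop :=
  (forall i j, periodic_xy (A i j)) /\
  (forall x y t, 0 <= t -> forall xi : coord -> R,
     / Lam * sqnorm xi <= quadform A x y t xi /\
     quadform A x y t xi <= Lam * sqnorm xi) /\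
  (forall i j x y t, 0 < t ->
     cont3 (A i j) x y t /\
     forall d, pdex d (A i j) x y t /\ cont3 (pd d (A i j)) x y t /\
               Rabs (pd d (A i j) x y t) <= C).

Definition solves (A : matfun) (u : fun3) : Prop :=
  forall x y t, 0 < t ->
    pd DT (pd DT u) x y t
    + coord_sum (fun i => coord_sum (fun j =>
        pd (dir_of i) (fun x' y' t' => A i j x' y' t' * pd (dir_of j) u x' y' t')
           x y t)) = 0.

Definition A_id (A : matfun) (x y t : R) : Prop :=
  forall i j, A i j x y t = match i, j with
                            | CX, CX | CY, CY => 1
                            | _, _ => 0 end.

(** k_n = 2^(n + n0 - 1) (used for n >= 1) *)
Definition kk (n0 n : nat) : R := 2 ^ (n + n0 - 1).

Definition svar (m : nat) (x y : R) : R := if Nat.odd m then x else y.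

(* On the time window [t_n, t_n + 5] the solution is
   u = F(t) cos(k x) + G(t) cos(2 k y) with k = k_n, where
   (F, G) = a e^{-Phi(t)} (cos theta(t), sin theta(t)): during [2, 3] the angle
   theta turns the energy from the mode cos(k x) into cos(2 k y), and during
   [3, 4] the rate Phi' switches from k to 2 k.  The pair (F, G) solves
   F'' = k^2 p F - k al G, G'' = 4 k^2 q G + k al F, and this system is exactly
   u_tt + div(A grad u) = 0 for A = diag(p, q) plus al/k times a matrix of
   products of cos/sin(k x) and cos/sin(2 k y); the extra terms cancel by
   sin^2 + cos^2 = 1.  Since theta' and theta'' are O(1) while k >= 1000, the
   coefficients p, q stay bounded away from 0 and al, al' stay bounded, so A is
   uniformly elliptic with bounded derivatives.  Near both ends of a window u
   is a single exponential mode and A = Id, so consecutive windows, with x and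
   y exchanged, glue smoothly.  The frequencies double from one window to the
   next, so the amplitude at time T ~ 5 n is e^{-c 2^n} = e^{-c e^{c T}}. *)

From Stdlib Require Import Reals Lra Lia FunctionalExtensionality ZArith.
From Coquelicot Require Import Coquelicot.
Open Scope R_scope.

Lemma Rabs_mult_le_compat x y a b : Rabs x <= a -> Rabs y <= b -> Rabs (x * y) <= a * b.
Proof. intros; rewrite Rabs_mult; apply Rmult_le_compat; auto; apply Rabs_pos. Qed.

Lemma Rabs_plus_le_compat x y a b : Rabs x <= a -> Rabs y <= b -> Rabs (x + y) <= a + b.
Proof. intros; eapply Rle_trans; [apply Rabs_triang | lra]. Qed.

Lemma Rabs_minus_le_compat x y a b : Rabs x <= a -> Rabs y <= b -> Rabs (x - y) <= a + b.
Proof. intros; eapply Rle_trans; [apply Rabs_triang | rewrite Rabs_Ropp; lra]. Qed.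

Lemma Rabs_cos_le_1 x : Rabs (cos x) <= 1.
Proof. apply Rabs_le, COS_bound. Qed.

Lemma Rabs_sin_le_1 x : Rabs (sin x) <= 1.
Proof. apply Rabs_le, SIN_bound. Qed.

Lemma exp_le_compat x y : x <= y -> exp x <= exp y.
Proof. intros [H | ->]; [left; apply exp_increasing; auto | lra]. Qed.

Lemma continuous_of_ex_derive (h : R -> R) t : (forall t, ex_derive h t) -> continuous h t.
Proof. intros H; apply (ex_derive_continuous (V := R_NormedModule)), H. Qed.

Lemma continuous_of_is_derive (f f' : R -> R) t :
  (forall t, is_derive f t (f' t)) -> continuous f t.
Proof. intros H; apply continuous_of_ex_derive; intros; eexists; apply H. Qed.

Lemma Derive_of_is_derive (f f' : R -> R) t :
  (forall t, is_derive f t (f' t)) -> Derive (fun s => f s) t = f' t.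
Proof. intros H; apply is_derive_unique, H. Qed.

Lemma ex_derive_of_is_derive (f f' : R -> R) t :
  (forall t, is_derive f t (f' t)) -> ex_derive (fun s => f s) t.
Proof. intros H; eexists; apply H. Qed.

(** * Piecewise functions and a smooth transition *)

Definition glue (a : R) (l r : R -> R) (x : R) : R :=
  if Rle_dec x a then l x else r x.

Lemma glue_left a l r x : x <= a -> glue a l r x = l x.
Proof. unfold glue; destruct (Rle_dec x a); [auto | lra]. Qed.

Lemma glue_right a l r x : a < x -> glue a l r x = r x.
Proof. unfold glue; destruct (Rle_dec x a); [lra | auto]. Qed.

Lemma is_derive_glue (a : R) (l l' r r' : R -> R) :
  (forall x, is_derive l x (l' x)) -> (forall x, is_derive r x (r' x)) ->
  l a = r a -> l' a = r' a ->
  forall x, is_derive (glue a l r) x (glue a l' r' x).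
Proof.
  intros Hl Hr E0 E1 x.
  destruct (Rtotal_order x a) as [Hx | [<- | Hx]].
  - rewrite glue_left by lra.
    apply is_derive_ext_loc with l; [| apply Hl].
    apply (locally_interval _ x m_infty a); simpl; auto.
    intros y _ Hy; rewrite glue_left; lra.
  - rewrite glue_left by lra.
    apply is_derive_Reals; intros eps Heps.
    destruct (proj1 (is_derive_Reals _ _ _) (Hl x) eps Heps) as [d1 Hd1].
    destruct (proj1 (is_derive_Reals _ _ _) (Hr x) eps Heps) as [d2 Hd2].
    assert (Hd : 0 < Rmin d1 d2) by (apply Rmin_pos; apply cond_pos).
    exists (mkposreal _ Hd); intros h Hh Hhd; simpl in Hhd.
    rewrite (glue_left x l r x) by lra.
    destruct (Rle_dec (x + h) x).
    + rewrite glue_left by lra.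
      apply Hd1; auto. apply Rlt_le_trans with (1 := Hhd), Rmin_l.
    + rewrite glue_right, E0, E1 by lra.
      apply Hd2; auto. apply Rlt_le_trans with (1 := Hhd), Rmin_r.
  - rewrite glue_right by lra.
    apply is_derive_ext_loc with r; [| apply Hr].
    apply (locally_interval _ x a p_infty); simpl; auto.
    intros y Hy _; rewrite glue_right; lra.
Qed.

Lemma continuous_glue (a : R) (l r : R -> R) :
  (forall x, continuous l x) -> (forall x, continuous r x) -> l a = r a ->
  forall x, continuous (glue a l r) x.
Proof.
  intros Hl Hr E0 x.
  destruct (Rtotal_order x a) as [Hx | [<- | Hx]].
  - apply continuous_ext_loc with l; [| apply Hl].
    apply (locally_interval _ x m_infty a); simpl; auto.
    intros y _ Hy; rewrite glue_left; lra.
  - apply continuity_pt_filterlim; intros eps Heps.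
    destruct (proj2 (continuity_pt_filterlim _ _) (Hl x) eps Heps) as [d1 [Hd1 H1]].
    destruct (proj2 (continuity_pt_filterlim _ _) (Hr x) eps Heps) as [d2 [Hd2 H2]].
    exists (Rmin d1 d2); split; [apply Rmin_pos; auto |].
    intros y [_ Hy]; simpl in *; unfold R_dist in *.
    rewrite (glue_left x l r x) by lra.
    destruct (Req_dec y x) as [-> | Hyx].
    { rewrite glue_left by lra; simpl; unfold R_dist; rewrite Rminus_diag, Rabs_R0; lra. }
    destruct (Rle_dec y x).
    + rewrite glue_left by lra.
      apply H1; split; [unfold D_x, no_cond; auto |].
      simpl; unfold R_dist; apply Rlt_le_trans with (1 := Hy), Rmin_l.
    + rewrite glue_right, E0 by lra.
      apply H2; split; [unfold D_x, no_cond; auto |].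
      simpl; unfold R_dist; apply Rlt_le_trans with (1 := Hy), Rmin_r.
  - apply continuous_ext_loc with r; [| apply Hr].
    apply (locally_interval _ x a p_infty); simpl; auto.
    intros y Hy _; rewrite glue_right; lra.
Qed.

Definition splice (m r : R -> R) : R -> R := glue 0 (fun _ => 0) (glue 1 m r).

Lemma is_derive_splice m m' r r' :
  (forall x, is_derive m x (m' x)) -> (forall x, is_derive r x (r' x)) ->
  m 0 = 0 -> m' 0 = 0 -> m 1 = r 1 -> m' 1 = r' 1 ->
  forall x, is_derive (splice m r) x (splice m' r' x).
Proof.
  intros Hm Hr Em0 Em'0 Em1 Em'1; unfold splice.
  apply is_derive_glue; [intros; auto_derive; auto | apply is_derive_glue; auto | |];
    rewrite glue_left; auto; lra.
Qed.

Lemma splice_left m r s : s <= 0 -> splice m r s = 0.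
Proof. intros; unfold splice; rewrite glue_left; auto. Qed.

Lemma splice_right m r s : 1 <= s -> m 1 = r 1 -> splice m r s = r s.
Proof.
  intros Hs E; unfold splice; rewrite glue_right by lra.
  destruct (Req_dec s 1) as [-> |]; [rewrite glue_left; auto; lra | rewrite glue_right; auto; lra].
Qed.

Lemma splice_ind (m r : R -> R) (Q : R -> Prop) s :
  m 0 = 0 -> m 1 = r 1 -> Q 0 ->
  (0 <= s <= 1 -> Q (m s)) -> (1 <= s -> Q (r s)) -> Q (splice m r s).
Proof.
  intros E0 E1 Q0 Qm Qr.
  destruct (Rle_dec s 0); [rewrite splice_left; auto |].
  destruct (Rle_dec s 1); [| rewrite splice_right by (auto; lra); apply Qr; lra].
  unfold splice; rewrite glue_right, glue_left by lra; apply Qm; lra.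
Qed.

(* [poly1] is the degree-7 smoothstep (its first three derivatives vanish at 0
   and 1), [poly0] its primitive and [poly2], [poly3], [poly4] its derivatives;
   hence [rho1] is a C^3 transition from 0 to 1 with primitive [rho0]. *)
Definition poly0 (s : R) := 7*s^5 - 14*s^6 + 10*s^7 - 5/2*s^8.
Definition poly1 (s : R) := 35*s^4 - 84*s^5 + 70*s^6 - 20*s^7.
Definition poly2 (s : R) := 140*s^3 - 420*s^4 + 420*s^5 - 140*s^6.
Definition poly3 (s : R) := 420*s^2 - 1680*s^3 + 2100*s^4 - 840*s^5.
Definition poly4 (s : R) := 840*s - 5040*s^2 + 8400*s^3 - 4200*s^4.

Definition rho0 := splice poly0 (fun s => s - 1/2).
Definition rho1 := splice poly1 (fun _ => 1).
Definition rho2 := splice poly2 (fun _ => 0).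
Definition rho3 := splice poly3 (fun _ => 0).
Definition rho4 := splice poly4 (fun _ => 0).

Ltac splice_derive :=
  apply is_derive_splice; intros;
  unfold poly0, poly1, poly2, poly3, poly4; try auto_derive; auto; try ring; try field; lra.

Lemma is_derive_rho0 x : is_derive rho0 x (rho1 x). Proof. splice_derive. Qed.
Lemma is_derive_rho1 x : is_derive rho1 x (rho2 x). Proof. splice_derive. Qed.
Lemma is_derive_rho2 x : is_derive rho2 x (rho3 x). Proof. splice_derive. Qed.
Lemma is_derive_rho3 x : is_derive rho3 x (rho4 x). Proof. splice_derive. Qed.

Lemma continuous_rho4 x : continuous rho4 x.
Proof.
  unfold rho4, splice.
  apply continuous_glue;
    [intros; apply continuous_const | | rewrite glue_left by lra; unfold poly4; ring].
  apply continuous_glue; [| intros; apply continuous_const | unfold poly4; ring].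
  intros y; apply (ex_derive_continuous (V := R_NormedModule)); unfold poly4; auto_derive; auto.
Qed.

Lemma Derive_rho0 x : Derive (fun y => rho0 y) x = rho1 x.
Proof. apply is_derive_unique, is_derive_rho0. Qed.
Lemma Derive_rho1 x : Derive (fun y => rho1 y) x = rho2 x.
Proof. apply is_derive_unique, is_derive_rho1. Qed.
Lemma Derive_rho2 x : Derive (fun y => rho2 y) x = rho3 x.
Proof. apply is_derive_unique, is_derive_rho2. Qed.
Lemma Derive_rho3 x : Derive (fun y => rho3 y) x = rho4 x.
Proof. apply is_derive_unique, is_derive_rho3. Qed.
Lemma ex_derive_rho0 x : ex_derive (fun y => rho0 y) x. Proof. eexists; apply is_derive_rho0. Qed.
Lemma ex_derive_rho1 x : ex_derive (fun y => rho1 y) x. Proof. eexists; apply is_derive_rho1. Qed.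
Lemma ex_derive_rho2 x : ex_derive (fun y => rho2 y) x. Proof. eexists; apply is_derive_rho2. Qed.
Lemma ex_derive_rho3 x : ex_derive (fun y => rho3 y) x. Proof. eexists; apply is_derive_rho3. Qed.
#[local] Hint Resolve ex_derive_rho0 ex_derive_rho1 ex_derive_rho2 ex_derive_rho3 : core.

Lemma rho0_left s : s <= 0 -> rho0 s = 0. Proof. apply splice_left. Qed.
Lemma rho1_left s : s <= 0 -> rho1 s = 0. Proof. apply splice_left. Qed.
Lemma rho2_left s : s <= 0 -> rho2 s = 0. Proof. apply splice_left. Qed.
Lemma rho3_left s : s <= 0 -> rho3 s = 0. Proof. apply splice_left. Qed.

Ltac splice_right_tac := intros; unfold rho0, rho1, rho2, rho3;
  rewrite splice_right by (auto; unfold poly0, poly1, poly2, poly3; field); reflexivity.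

Lemma rho0_right s : 1 <= s -> rho0 s = s - 1/2. Proof. splice_right_tac. Qed.
Lemma rho1_right s : 1 <= s -> rho1 s = 1. Proof. splice_right_tac. Qed.
Lemma rho2_right s : 1 <= s -> rho2 s = 0. Proof. splice_right_tac. Qed.
Lemma rho3_right s : 1 <= s -> rho3 s = 0. Proof. splice_right_tac. Qed.

Lemma rho0_ge0 s : 0 <= rho0 s.
Proof.
  unfold rho0; apply splice_ind; unfold poly0; try lra.
  intros [H0 H1].
  assert (0 <= 13/2 - 15/2*s + 5/2*s^2) by nra.
  assert (0 <= s^5) by (apply pow_le; lra).
  replace (7*s^5 - 14*s^6 + 10*s^7 - 5/2*s^8)
    with (s^5 * (1/2 + (1-s) * (13/2 - 15/2*s + 5/2*s^2))) by field.
  apply Rmult_le_pos; nra.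
Qed.

Lemma poly1_ge0 s : 0 <= s <= 1 -> 0 <= poly1 s.
Proof.
  intros [H0 H1]; unfold poly1.
  assert (0 <= 34 - 50*s + 20*s^2) by nra.
  assert (0 <= s^4) by (apply pow_le; lra).
  replace (35*s^4 - 84*s^5 + 70*s^6 - 20*s^7)
    with (s^4 * (1 + (1-s) * (34 - 50*s + 20*s^2))) by ring.
  apply Rmult_le_pos; nra.
Qed.

(* [1 - poly1 s = poly1 (1 - s)] by the symmetry of the smoothstep. *)
Lemma rho1_bounds s : 0 <= rho1 s <= 1.
Proof.
  unfold rho1; apply splice_ind; unfold poly1; try lra.
  intros Hs; split; [apply (poly1_ge0 s Hs) |].
  assert (H := poly1_ge0 (1 - s) ltac:(lra)); unfold poly1 in H; nra.
Qed.

Lemma unit_interval_mult_bounds s : 0 <= s <= 1 -> 0 <= s * (1 - s) <= 1/4.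
Proof. intros; split; [apply Rmult_le_pos | pose proof (pow2_ge_0 (s - 1/2))]; nra. Qed.

(* Write [poly2], [poly3], [poly4] as polynomials in [w = s (1 - s)], with
   [0 <= w <= 1/4] on [0, 1]. *)
Lemma Rabs_rho2_le s : Rabs (rho2 s) <= 3.
Proof.
  unfold rho2; apply splice_ind; unfold poly2; try ring; try (intros; rewrite Rabs_R0; lra).
  intros [H0 H1]; set (w := s * (1 - s)).
  assert (Hw := unit_interval_mult_bounds s ltac:(lra)); fold w in Hw.
  replace (140*s^3 - 420*s^4 + 420*s^5 - 140*s^6) with (140 * w^3) by (unfold w; ring).
  rewrite Rabs_pos_eq; nra.
Qed.

Lemma Rabs_rho3_le s : Rabs (rho3 s) <= 30.
Proof.
  unfold rho3; apply splice_ind; unfold poly3; try ring; try (intros; rewrite Rabs_R0; lra).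
  intros [H0 H1]; set (w := s * (1 - s)).
  assert (Hw := unit_interval_mult_bounds s ltac:(lra)); fold w in Hw.
  replace (420*s^2 - 1680*s^3 + 2100*s^4 - 840*s^5) with (420 * w^2 * (1 - 2*s))
    by (unfold w; ring).
  apply Rabs_le; assert (0 <= w^2 <= 1/16) by nra; nra.
Qed.

Lemma Rabs_rho4_le s : Rabs (rho4 s) <= 300.
Proof.
  unfold rho4; apply splice_ind; unfold poly4; try ring; try (intros; rewrite Rabs_R0; lra).
  intros [H0 H1]; set (w := s * (1 - s)).
  assert (Hw := unit_interval_mult_bounds s ltac:(lra)); fold w in Hw.
  replace (840*s - 5040*s^2 + 8400*s^3 - 4200*s^4) with (840 * w * (1 - 5*w)) by (unfold w; ring).
  apply Rabs_le; nra.
Qed.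

(** * The profile of one window *)

Definition phase k t := k * (t + rho0 (t - 3)).
Definition phase1 k t := k * (1 + rho1 (t - 3)).
Definition phase2 k t := k * rho2 (t - 3).
Definition phase3 k t := k * rho3 (t - 3).
Definition angle t := PI/2 * rho1 (t - 2).
Definition angle1 t := PI/2 * rho2 (t - 2).
Definition angle2 t := PI/2 * rho3 (t - 2).
Definition angle3 t := PI/2 * rho4 (t - 2).

Definition prof_f a k t := a * exp (- phase k t) * cos (angle t).
Definition prof_g a k t := a * exp (- phase k t) * sin (angle t).
Definition prof_f1 a k t :=
  a * exp (- phase k t) * (- phase1 k t * cos (angle t) - angle1 t * sin (angle t)).
Definition prof_g1 a k t :=
  a * exp (- phase k t) * (- phase1 k t * sin (angle t) + angle1 t * cos (angle t)).
Definition radial2 k t := phase1 k t ^ 2 - angle1 t ^ 2 - phase2 k t.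
Definition tangential2 k t := angle2 t - 2 * phase1 k t * angle1 t.
Definition prof_f2 a k t :=
  a * exp (- phase k t) * (radial2 k t * cos (angle t) - tangential2 k t * sin (angle t)).
Definition prof_g2 a k t :=
  a * exp (- phase k t) * (radial2 k t * sin (angle t) + tangential2 k t * cos (angle t)).

(* For [t >= 2], [coef_q = radial2 / (4 k^2)] as the equation for [prof_g]
   demands; for [t <= 2] the angle is 0, so [prof_g] vanishes and [coef_q] is
   free: it is deformed to 1 for [t <= 1]. *)
Definition coef_p k t := 1 - angle1 t ^ 2 / k ^ 2.
Definition coef_q k t := 1 - 3/4 * rho1 (t - 1) + (radial2 k t / k ^ 2 - 1) / 4.
Definition coef_al k t := tangential2 k t / k.
Definition coef_p1 k t := - 2 * angle1 t * angle2 t / k ^ 2.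
Definition coef_q1 k t := - 3/4 * rho2 (t - 1)
  + (2 * phase1 k t * phase2 k t - 2 * angle1 t * angle2 t - phase3 k t) / (4 * k ^ 2).
Definition coef_al1 k t := (angle3 t - 2 * (phase2 k t * angle1 t + phase1 k t * angle2 t)) / k.

Ltac unfold_profile :=
  unfold prof_f, prof_g, prof_f1, prof_g1, prof_f2, prof_g2,
    coef_p, coef_q, coef_al, coef_p1, coef_q1, coef_al1, radial2, tangential2,
    phase, phase1, phase2, phase3, angle, angle1, angle2, angle3.

Ltac profile_derive :=
  unfold_profile; auto_derive; repeat split; auto;
  rewrite ?Derive_rho0, ?Derive_rho1, ?Derive_rho2, ?Derive_rho3; unfold Rminus; try ring.

Lemma is_derive_prof_f a k t : is_derive (prof_f a k) t (prof_f1 a k t).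
Proof. profile_derive. Qed.
Lemma is_derive_prof_g a k t : is_derive (prof_g a k) t (prof_g1 a k t).
Proof. profile_derive. Qed.
Lemma is_derive_prof_f1 a k t : is_derive (prof_f1 a k) t (prof_f2 a k t).
Proof. profile_derive. Qed.
Lemma is_derive_prof_g1 a k t : is_derive (prof_g1 a k) t (prof_g2 a k t).
Proof. profile_derive. Qed.
Lemma is_derive_coef_p k t : k <> 0 -> is_derive (coef_p k) t (coef_p1 k t).
Proof. intros; profile_derive; field; auto. Qed.
Lemma is_derive_coef_q k t : k <> 0 -> is_derive (coef_q k) t (coef_q1 k t).
Proof. intros; profile_derive; field; auto. Qed.
Lemma is_derive_coef_al k t : k <> 0 -> is_derive (coef_al k) t (coef_al1 k t).
Proof. intros; profile_derive; field; auto. Qed.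

Lemma continuous_prof_f2 a k t : continuous (prof_f2 a k) t.
Proof. apply continuous_of_ex_derive; intros; profile_derive. Qed.
Lemma continuous_prof_g2 a k t : continuous (prof_g2 a k) t.
Proof. apply continuous_of_ex_derive; intros; profile_derive. Qed.
Lemma continuous_coef_p1 k t : continuous (coef_p1 k) t.
Proof. apply continuous_of_ex_derive; intros; profile_derive. Qed.
Lemma continuous_coef_q1 k t : continuous (coef_q1 k) t.
Proof. apply continuous_of_ex_derive; intros; profile_derive. Qed.

(* [rho4] is only continuous, so [coef_al1] is split into its [rho4] part and
   a differentiable part. *)
Lemma continuous_coef_al1 k t : continuous (coef_al1 k) t.
Proof.
  apply (continuous_ext (fun t => PI/2 / k * rho4 (t - 2)
           + (- 2 * (phase2 k t * angle1 t + phase1 k t * angle2 t) / k))).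
  - intros s; unfold coef_al1, angle3; simpl; unfold Rdiv; ring.
  - apply (continuous_plus (fun t => PI/2 / k * rho4 (t - 2))).
    + apply (continuous_scal_r (PI/2 / k) (fun t => rho4 (t - 2))).
      apply (continuous_comp (fun t => t - 2) rho4); [| apply continuous_rho4].
      apply continuous_of_ex_derive; intros; auto_derive; auto.
    + apply continuous_of_ex_derive; intros; profile_derive.
Qed.

Lemma angle_left t : t <= 2 -> angle t = 0.
Proof. intros; unfold angle; rewrite rho1_left; [ring | lra]. Qed.
Lemma angle_right t : 3 <= t -> angle t = PI/2.
Proof. intros; unfold angle; rewrite rho1_right; [ring | lra]. Qed.

(* Up to time 3 the phase is linear ([phase1 = k], [phase2 = 0]); afterwards
   [cos angle = 0]. *)
Lemma prof_f_ode a k t : k <> 0 ->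
  prof_f2 a k t = k^2 * coef_p k t * prof_f a k t - k * coef_al k t * prof_g a k t.
Proof.
  intros Hk; destruct (Rle_dec t 3).
  - unfold prof_f2, prof_f, prof_g, coef_p, coef_al, radial2, phase1, phase2.
    rewrite rho1_left, rho2_left by lra; field; auto.
  - unfold prof_f2, prof_f, prof_g, coef_p, coef_al.
    rewrite angle_right, cos_PI2 by lra; field; auto.
Qed.

Lemma prof_g_ode a k t : k <> 0 ->
  prof_g2 a k t = 4 * k^2 * coef_q k t * prof_g a k t + k * coef_al k t * prof_f a k t.
Proof.
  intros Hk; destruct (Rle_dec t 2).
  - unfold prof_g2, prof_f, prof_g, coef_q, coef_al.
    rewrite angle_left, sin_0 by lra; field; auto.
  - unfold prof_g2, prof_f, prof_g, coef_q, coef_al.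
    rewrite rho1_right by lra; field; auto.
Qed.

Lemma profile_start a k t : k <> 0 -> t <= 1 ->
  prof_f a k t = a * exp (- (k * t)) /\ prof_g a k t = 0 /\
  coef_p k t = 1 /\ coef_q k t = 1 /\ coef_al k t = 0.
Proof.
  intros Hk Ht; unfold_profile.
  repeat first [rewrite rho0_left by lra | rewrite rho1_left by lra
               | rewrite rho2_left by lra | rewrite rho3_left by lra].
  replace (PI/2 * 0) with 0 by ring; rewrite cos_0, sin_0.
  repeat split; try field; auto; rewrite Rplus_0_r; ring.
Qed.

Lemma profile_end a k t : k <> 0 -> 4 <= t ->
  prof_f a k t = 0 /\ prof_g a k t = a * exp (- (k * (2 * t - 7/2))) /\
  coef_p k t = 1 /\ coef_q k t = 1 /\ coef_al k t = 0.
Proof.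
  intros Hk Ht; unfold_profile.
  repeat first [rewrite rho0_right by lra | rewrite rho1_right by lra
               | rewrite rho2_right by lra | rewrite rho3_right by lra].
  replace (PI/2 * 1) with (PI/2) by ring; rewrite cos_PI2, sin_PI2.
  repeat split; try field; auto.
  replace (k * (t + (t - 3 - 1 / 2))) with (k * (2 * t - 7 / 2)) by field; ring.
Qed.

Lemma Rabs_PI2_le : Rabs (PI/2) <= 2.
Proof. generalize PI_4 PI_RGT_0; intros; rewrite Rabs_pos_eq; lra. Qed.

Lemma Rabs_angle1_le t : Rabs (angle1 t) <= 6.
Proof.
  unfold angle1; replace 6 with (2*3) by ring.
  apply Rabs_mult_le_compat; [apply Rabs_PI2_le | apply Rabs_rho2_le].
Qed.
Lemma Rabs_angle2_le t : Rabs (angle2 t) <= 60.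
Proof.
  unfold angle2; replace 60 with (2*30) by ring.
  apply Rabs_mult_le_compat; [apply Rabs_PI2_le | apply Rabs_rho3_le].
Qed.
Lemma Rabs_angle3_le t : Rabs (angle3 t) <= 600.
Proof.
  unfold angle3; replace 600 with (2*300) by ring.
  apply Rabs_mult_le_compat; [apply Rabs_PI2_le | apply Rabs_rho4_le].
Qed.

Lemma phase1_bounds k t : 0 < k -> k <= phase1 k t <= 2 * k.
Proof. intros; unfold phase1; generalize (rho1_bounds (t - 3)); intros; split; nra. Qed.
Lemma Rabs_phase2_le k t : 0 < k -> Rabs (phase2 k t) <= 3 * k.
Proof.
  intros; unfold phase2; rewrite Rmult_comm.
  apply Rabs_mult_le_compat; [apply Rabs_rho2_le | rewrite Rabs_pos_eq; lra].
Qed.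

Lemma phase_ge k t : 0 < k -> k * t <= phase k t.
Proof. intros; unfold phase; generalize (rho0_ge0 (t - 3)); intros; nra. Qed.

(* Every coefficient is [1 + O(1/k)] or [O(1)]: write it in terms of [w = 1/k]. *)
Lemma coef_bounds k t : 1000 <= k ->
  99/100 <= coef_p k t <= 1 /\ 1/5 <= coef_q k t <= 2 /\ Rabs (coef_al k t) <= 25 /\
  Rabs (coef_p1 k t) <= 1 /\ Rabs (coef_q1 k t) <= 6 /\ Rabs (coef_al1 k t) <= 300.
Proof.
  intros Hk; assert (Hk0 : k <> 0) by lra.
  set (w := / k).
  assert (Hw : 0 < w <= 1/1000).
  { unfold w; split; [apply Rinv_0_lt_compat; lra |].
    replace (1/1000) with (/1000) by field; apply Rinv_le_contravar; lra. }
  generalize (Rabs_angle1_le t) (Rabs_angle2_le t) (Rabs_angle3_le t); intros B1 B2 B3.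
  generalize (rho1_bounds (t - 3)) (rho1_bounds (t - 1)) (Rabs_rho2_le (t - 3))
    (Rabs_rho2_le (t - 1)) (Rabs_rho3_le (t - 3)); intros R1 R1' R2 R2' R3.
  set (u1 := angle1 t) in *; set (u2 := angle2 t) in *; set (u3 := angle3 t) in *.
  set (r1 := rho1 (t - 3)) in *; set (r2 := rho2 (t - 3)) in *; set (r3 := rho3 (t - 3)) in *.
  assert (Ep : coef_p k t = 1 - (u1 * w)^2) by (unfold coef_p, u1, w; field; auto).
  assert (Eq : coef_q k t = 1 - 3/4 * rho1 (t - 1) + ((1 + r1)^2 - (u1 * w)^2 - r2 * w - 1) / 4)
    by (unfold coef_q, radial2, phase1, phase2, u1, r1, r2, w; field; auto).
  assert (Eal : coef_al k t = u2 * w - 2 * (1 + r1) * u1)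
    by (unfold coef_al, tangential2, phase1, u1, u2, r1, w; field; auto).
  assert (Ep1 : coef_p1 k t = - 2 * (u1 * w) * (u2 * w))
    by (unfold coef_p1, u1, u2, w; field; auto).
  assert (Eq1 : coef_q1 k t = - 3/4 * rho2 (t - 1)
                   + (2 * (1 + r1) * r2 - 2 * (u1 * w) * (u2 * w) - r3 * w) / 4)
    by (unfold coef_q1, phase1, phase2, phase3, u1, u2, r1, r2, r3, w; field; auto).
  assert (Eal1 : coef_al1 k t = u3 * w - 2 * (r2 * u1 + (1 + r1) * u2))
    by (unfold coef_al1, phase1, phase2, u1, u2, u3, r1, r2, w; field; auto).
  assert (Hu1w : Rabs (u1 * w) <= 6/1000).
  { rewrite Rabs_mult, (Rabs_pos_eq w) by lra; generalize (Rabs_pos u1); nra. }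
  assert (Hu2w : Rabs (u2 * w) <= 60/1000).
  { rewrite Rabs_mult, (Rabs_pos_eq w) by lra; generalize (Rabs_pos u2); nra. }
  apply Rabs_le_between in B1, B2, B3, R2, R2', R3, Hu1w, Hu2w.
  rewrite Ep, Eq, Eal, Ep1, Eq1, Eal1.
  repeat split; try apply Rabs_le; try split; nra.
Qed.

Lemma profile_factor_bounds k t : 1000 <= k ->
  Rabs (- phase1 k t * cos (angle t) - angle1 t * sin (angle t)) <= 6 * k^2 /\
  Rabs (- phase1 k t * sin (angle t) + angle1 t * cos (angle t)) <= 6 * k^2 /\
  Rabs (radial2 k t * cos (angle t) - tangential2 k t * sin (angle t)) <= 6 * k^2 /\
  Rabs (radial2 k t * sin (angle t) + tangential2 k t * cos (angle t)) <= 6 * k^2.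
Proof.
  intros Hk.
  generalize (Rabs_angle1_le t) (Rabs_angle2_le t); intros B1 B2.
  generalize (phase1_bounds k t ltac:(lra)) (Rabs_phase2_le k t ltac:(lra)); intros P1 P2.
  generalize (Rabs_cos_le_1 (angle t)) (Rabs_sin_le_1 (angle t)); intros C S.
  assert (Hk2 : 1000 * k <= k^2) by nra.
  assert (HP1 : Rabs (phase1 k t) <= 2 * k) by (apply Rabs_le; lra).
  assert (HNP1 : Rabs (- phase1 k t) <= 2 * k) by (rewrite Rabs_Ropp; auto).
  assert (Hrad : Rabs (radial2 k t) <= 4 * k^2 + 36 + 3 * k).
  { unfold radial2; rewrite <- !Rsqr_pow2; unfold Rsqr.
    replace (4 * (k * k) + 36 + 3 * k) with ((2*k) * (2*k) + 6 * 6 + 3 * k) by ring.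
    apply Rabs_minus_le_compat; [apply Rabs_minus_le_compat; apply Rabs_mult_le_compat |]; auto. }
  assert (Htan : Rabs (tangential2 k t) <= 60 + 24 * k).
  { unfold tangential2; apply Rle_trans with (60 + 2 * (2 * k * 6)); [| nra].
    apply Rabs_minus_le_compat; [exact B2 |]; rewrite Rmult_assoc.
    apply Rabs_mult_le_compat; [rewrite Rabs_pos_eq by lra; lra |].
    apply Rabs_mult_le_compat; auto. }
  repeat split; eapply Rle_trans;
    try (apply Rabs_minus_le_compat; apply Rabs_mult_le_compat; eauto);
    try (apply Rabs_plus_le_compat; apply Rabs_mult_le_compat; eauto); nra.
Qed.

Lemma profile_bounds a k t : 1000 <= k ->
  let B := Rabs a * exp (- (k * t)) * (6 * k ^ 2) in
  Rabs (prof_f a k t) <= B /\ Rabs (prof_g a k t) <= B /\ Rabs (prof_f1 a k t) <= B /\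
  Rabs (prof_g1 a k t) <= B /\ Rabs (prof_f2 a k t) <= B /\ Rabs (prof_g2 a k t) <= B.
Proof.
  intros Hk B.
  assert (HE : 0 < exp (- phase k t) <= exp (- (k * t))).
  { split; [apply exp_pos | apply exp_le_compat; generalize (phase_ge k t); lra]. }
  assert (Scale : forall X, Rabs X <= 6 * k^2 -> Rabs (a * exp (- phase k t) * X) <= B).
  { intros X HX; unfold B; rewrite !Rabs_mult, (Rabs_pos_eq (exp _)) by lra.
    generalize (Rabs_pos a) (Rabs_pos X); intros.
    apply Rmult_le_compat; [apply Rmult_le_pos; lra | lra | | auto].
    apply Rmult_le_compat_l; lra. }
  assert (Hk2 : 1 <= 6 * k^2) by nra.
  destruct (profile_factor_bounds k t Hk) as [F1 [G1 [F2 G2]]].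
  unfold prof_f, prof_g, prof_f1, prof_g1, prof_f2, prof_g2.
  repeat split; apply Scale; auto; eapply Rle_trans;
    try apply Rabs_cos_le_1; try apply Rabs_sin_le_1; lra.
Qed.

(** * Partial derivatives in (x, y, t) *)

Definition continuous3 (f : fun3) x y t :=
  continuous (fun p : R * R * R => f (fst (fst p)) (snd (fst p)) (snd p)) (x, y, t).

Lemma cont3_of_continuous3 f x y t : continuous3 f x y t -> cont3 f x y t.
Proof.
  intros H eps Heps.
  destruct (proj1 (filterlim_locally _ _) H (mkposreal _ Heps)) as [d Hd].
  exists d; split; [apply cond_pos |].
  intros x' y' t' Hx Hy Ht; apply (Hd (x', y', t')); repeat split; simpl; auto.
Qed.

Lemma continuous3_plus f g x y t : continuous3 f x y t -> continuous3 g x y t ->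
  continuous3 (fun x y t => f x y t + g x y t) x y t.
Proof.
  intros; apply (continuous_plus (fun p : R*R*R => f _ _ _) (fun p : R*R*R => g _ _ _)); auto.
Qed.
Lemma continuous3_mult f g x y t : continuous3 f x y t -> continuous3 g x y t ->
  continuous3 (fun x y t => f x y t * g x y t) x y t.
Proof.
  intros; apply (continuous_mult (fun p : R*R*R => f _ _ _) (fun p : R*R*R => g _ _ _)); auto.
Qed.
Lemma continuous3_opp f x y t : continuous3 f x y t -> continuous3 (fun x y t => - f x y t) x y t.
Proof. intros; apply (continuous_opp (fun p : R*R*R => f _ _ _)); auto. Qed.
Lemma continuous3_const c x y t : continuous3 (fun _ _ _ => c) x y t.
Proof. apply continuous_const. Qed.
Lemma continuous3_t (h : R -> R) x y t : continuous h t -> continuous3 (fun _ _ t => h t) x y t.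
Proof. intros; apply (continuous_comp (fun p : R*R*R => snd p) h); auto; apply continuous_snd. Qed.
Lemma continuous3_x (h : R -> R) x y t : continuous h x -> continuous3 (fun x _ _ => h x) x y t.
Proof.
  intros; apply (continuous_comp (fun p : R*R*R => fst (fst p)) h); auto.
  apply (continuous_comp (fun p : R*R*R => fst p) fst); apply continuous_fst.
Qed.
Lemma continuous3_y (h : R -> R) x y t : continuous h y -> continuous3 (fun _ y _ => h y) x y t.
Proof.
  intros; apply (continuous_comp (fun p : R*R*R => snd (fst p)) h); auto.
  apply (continuous_comp (fun p : R*R*R => fst p) snd); [apply continuous_fst | apply continuous_snd].
Qed.

Lemma continuous_cos_mult k x : continuous (fun x => cos (k * x)) x.
Proof. apply continuous_of_ex_derive; intros; auto_derive; auto. Qed.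
Lemma continuous_sin_mult k x : continuous (fun x => sin (k * x)) x.
Proof. apply continuous_of_ex_derive; intros; auto_derive; auto. Qed.

Ltac continuous3_step := match goal with
| |- continuous3 (fun x y t => ?c) _ _ _ => apply continuous3_const
| |- continuous3 (fun x y t => @?A x y t + @?B x y t) _ _ _ => apply (continuous3_plus A B)
| |- continuous3 (fun x y t => @?A x y t * @?B x y t) _ _ _ => apply (continuous3_mult A B)
| |- continuous3 (fun x y t => - @?A x y t) _ _ _ => apply (continuous3_opp A)
| |- continuous3 (fun x y t => cos (?k * x)) _ _ _ =>
    apply (continuous3_x (fun x => cos (k * x))), continuous_cos_mult
| |- continuous3 (fun x y t => sin (?k * x)) _ _ _ =>
    apply (continuous3_x (fun x => sin (k * x))), continuous_sin_mult
| |- continuous3 (fun x y t => cos (?k * y)) _ _ _ =>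
    apply (continuous3_y (fun x => cos (k * x))), continuous_cos_mult
| |- continuous3 (fun x y t => sin (?k * y)) _ _ _ =>
    apply (continuous3_y (fun x => sin (k * x))), continuous_sin_mult
| |- continuous3 (fun x y t => ?h t) _ _ _ => apply (continuous3_t h)
end.
Ltac continuous3_tac := apply cont3_of_continuous3; unfold Rdiv, Rminus; repeat continuous3_step.

Definition is_pd (d : dir) (f : fun3) x y t l : Prop :=
  match d with
  | DX => is_derive (fun s => f s y t) x l
  | DY => is_derive (fun s => f x s t) y l
  | DT => is_derive (fun s => f x y s) t l
  end.

Lemma is_pd_pdex d f x y t l : is_pd d f x y t l -> pdex d f x y t.
Proof. destruct d; simpl; intros H; eexists; eauto. Qed.

Lemma pd_eq_of_is_pd d f g : (forall x y t, is_pd d f x y t (g x y t)) -> pd d f = g.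
Proof.
  intros H; do 3 (apply functional_extensionality; intro).
  destruct d; apply is_derive_unique, H.
Qed.

Definition C2_at (u : fun3) x y t : Prop :=
  (forall d, pdex d u x y t) /\ (forall d1 d2, pdex d2 (pd d1 u) x y t) /\
  cont3 u x y t /\ (forall d, cont3 (pd d u) x y t) /\
  (forall d1 d2, cont3 (pd d2 (pd d1 u)) x y t).

Definition C2_bounded_at (u : fun3) (M : R) x y t : Prop :=
  Rabs (u x y t) <= M /\ (forall d, Rabs (pd d u x y t) <= M) /\
  (forall d1 d2, Rabs (pd d2 (pd d1 u) x y t) <= M).

Definition regular_at (C : R) (A : matfun) x y t : Prop :=
  forall i j, cont3 (A i j) x y t /\
    forall d, pdex d (A i j) x y t /\ cont3 (pd d (A i j)) x y t /\ Rabs (pd d (A i j) x y t) <= C.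

Definition elliptic_at (Lam : R) (A : matfun) x y t : Prop :=
  forall xi : coord -> R,
    / Lam * sqnorm xi <= quadform A x y t xi /\ quadform A x y t xi <= Lam * sqnorm xi.

Definition pde_lhs (A : matfun) (u : fun3) x y t :=
  pd DT (pd DT u) x y t + coord_sum (fun i => coord_sum (fun j =>
    pd (dir_of i) (fun x' y' t' => A i j x' y' t' * pd (dir_of j) u x' y' t') x y t)).

(** * Two-mode solutions *)

Section TwoModes.

Variables (f g f1 g1 f2 g2 : R -> R) (k : R).
Hypotheses (Hf : forall t, is_derive f t (f1 t)) (Hg : forall t, is_derive g t (g1 t))
  (Hf1 : forall t, is_derive f1 t (f2 t)) (Hg1 : forall t, is_derive g1 t (g2 t)).

Definition two_modes : fun3 := fun x y t => f t * cos (k * x) + g t * cos (2 * k * y).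

Definition two_modes_d (d : dir) : fun3 :=
  match d with
  | DX => fun x y t => f t * (- (k * sin (k * x)))
  | DY => fun x y t => g t * (- (2 * k * sin (2 * k * y)))
  | DT => fun x y t => f1 t * cos (k * x) + g1 t * cos (2 * k * y)
  end.

Definition two_modes_dd (d1 d2 : dir) : fun3 :=
  match d1, d2 with
  | DX, DX => fun x y t => f t * (- (k * k * cos (k * x)))
  | DY, DY => fun x y t => g t * (- (4 * k * k * cos (2 * k * y)))
  | DX, DT | DT, DX => fun x y t => f1 t * (- (k * sin (k * x)))
  | DY, DT | DT, DY => fun x y t => g1 t * (- (2 * k * sin (2 * k * y)))
  | DT, DT => fun x y t => f2 t * cos (k * x) + g2 t * cos (2 * k * y)
  | _, _ => fun x y t => 0
  end.

Ltac derive_with_hyps :=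
  auto_derive; repeat split;
  try apply (ex_derive_of_is_derive _ _ _ Hf); try apply (ex_derive_of_is_derive _ _ _ Hg);
  try apply (ex_derive_of_is_derive _ _ _ Hf1); try apply (ex_derive_of_is_derive _ _ _ Hg1);
  rewrite ?(Derive_of_is_derive _ _ _ Hf), ?(Derive_of_is_derive _ _ _ Hg),
    ?(Derive_of_is_derive _ _ _ Hf1), ?(Derive_of_is_derive _ _ _ Hg1); ring.

Lemma is_pd_two_modes d x y t : is_pd d two_modes x y t (two_modes_d d x y t).
Proof. destruct d; simpl; unfold two_modes; derive_with_hyps. Qed.

Lemma is_pd_two_modes_d d1 d2 x y t : is_pd d2 (two_modes_d d1) x y t (two_modes_dd d1 d2 x y t).
Proof. destruct d1, d2; simpl; derive_with_hyps. Qed.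

Lemma pd_two_modes d : pd d two_modes = two_modes_d d.
Proof. apply pd_eq_of_is_pd, is_pd_two_modes. Qed.

Lemma pd_two_modes_d d1 d2 : pd d2 (two_modes_d d1) = two_modes_dd d1 d2.
Proof. apply pd_eq_of_is_pd, is_pd_two_modes_d. Qed.

Lemma two_modes_C2_at x y t :
  (forall t, continuous f2 t) -> (forall t, continuous g2 t) -> C2_at two_modes x y t.
Proof.
  intros Cf2 Cg2.
  assert (Cf : forall t, continuous f t) by (intro; apply (continuous_of_is_derive _ _ _ Hf)).
  assert (Cg : forall t, continuous g t) by (intro; apply (continuous_of_is_derive _ _ _ Hg)).
  assert (Cf1 : forall t, continuous f1 t) by (intro; apply (continuous_of_is_derive _ _ _ Hf1)).
  assert (Cg1 : forall t, continuous g1 t) by (intro; apply (continuous_of_is_derive _ _ _ Hg1)).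
  repeat split.
  - intros d; eapply is_pd_pdex, is_pd_two_modes.
  - intros d1 d2; rewrite pd_two_modes; eapply is_pd_pdex, is_pd_two_modes_d.
  - unfold two_modes; continuous3_tac; auto.
  - intros d; rewrite pd_two_modes; destruct d; simpl; continuous3_tac; auto.
  - intros d1 d2; rewrite pd_two_modes, pd_two_modes_d; destruct d1, d2; simpl;
      continuous3_tac; auto.
Qed.

Lemma two_modes_bounded_at x y t B : 1 <= k ->
  Rabs (f t) <= B -> Rabs (g t) <= B -> Rabs (f1 t) <= B -> Rabs (g1 t) <= B ->
  Rabs (f2 t) <= B -> Rabs (g2 t) <= B ->
  C2_bounded_at two_modes (8 * k^2 * B) x y t.
Proof.
  intros Hk B0 B1 B2 B3 B4 B5.
  assert (HB : 0 <= B) by (generalize (Rabs_pos (f t)); lra).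
  assert (Hk2 : 1 <= k^2) by nra.
  assert (Mode : forall a c s, Rabs a <= B -> Rabs c <= 4 * k^2 -> Rabs s <= 1 ->
                   Rabs (a * (- (c * s))) <= 8 * k^2 * B).
  { intros a c s Ha Hc Hs; apply Rle_trans with (B * (4 * k^2 * 1)); [| nra].
    apply Rabs_mult_le_compat; auto; rewrite Rabs_Ropp; apply Rabs_mult_le_compat; auto. }
  assert (Sum : forall a b s s', Rabs a <= B -> Rabs b <= B -> Rabs s <= 1 -> Rabs s' <= 1 ->
                  Rabs (a * s + b * s') <= 8 * k^2 * B).
  { intros; apply Rle_trans with (B * 1 + B * 1); [| nra].
    apply Rabs_plus_le_compat; apply Rabs_mult_le_compat; auto. }
  assert (Hc1 : Rabs k <= 4 * k^2) by (rewrite Rabs_pos_eq; nra).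
  assert (Hc2 : Rabs (2 * k) <= 4 * k^2) by (rewrite Rabs_pos_eq; nra).
  assert (Hc3 : Rabs (k * k) <= 4 * k^2) by (rewrite Rabs_pos_eq; nra).
  assert (Hc4 : Rabs (4 * k * k) <= 4 * k^2) by (rewrite Rabs_pos_eq; nra).
  repeat split; [| intros d | intros d1 d2];
    rewrite ?pd_two_modes, ?pd_two_modes_d; [| destruct d | destruct d1, d2]; simpl;
    first [ apply Sum | apply Mode | rewrite Rabs_R0; nra ];
    auto using Rabs_cos_le_1, Rabs_sin_le_1.
Qed.

End TwoModes.

Section TwoModesCoefficients.

Variables (p q al p1 q1 al1 : R -> R) (k : R).
Hypotheses (Hk : 1000 <= k) (Hp : forall t, is_derive p t (p1 t))
  (Hq : forall t, is_derive q t (q1 t)) (Hal : forall t, is_derive al t (al1 t)).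

Definition two_modes_mat : matfun := fun i j =>
  match i, j with
  | CX, CX => fun x y t => p t + al t / k * (cos (k * x) * cos (2 * k * y))
  | CX, CY => fun x y t => - (al t / k) * (sin (k * x) * sin (2 * k * y))
  | CY, CX => fun x y t => al t / k * (sin (k * x) * sin (2 * k * y))
  | CY, CY => fun x y t => q t - al t / (4 * k) * (cos (k * x) * cos (2 * k * y))
  end.

Definition two_modes_mat_d (i j : coord) (d : dir) : fun3 :=
  match i, j, d with
  | CX, CX, DX => fun x y t => - al t * (sin (k * x) * cos (2 * k * y))
  | CX, CX, DY => fun x y t => - 2 * al t * (cos (k * x) * sin (2 * k * y))
  | CX, CX, DT => fun x y t => p1 t + al1 t / k * (cos (k * x) * cos (2 * k * y))
  | CX, CY, DX => fun x y t => - al t * (cos (k * x) * sin (2 * k * y))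
  | CX, CY, DY => fun x y t => - 2 * al t * (sin (k * x) * cos (2 * k * y))
  | CX, CY, DT => fun x y t => - (al1 t / k) * (sin (k * x) * sin (2 * k * y))
  | CY, CX, DX => fun x y t => al t * (cos (k * x) * sin (2 * k * y))
  | CY, CX, DY => fun x y t => 2 * al t * (sin (k * x) * cos (2 * k * y))
  | CY, CX, DT => fun x y t => al1 t / k * (sin (k * x) * sin (2 * k * y))
  | CY, CY, DX => fun x y t => al t / 4 * (sin (k * x) * cos (2 * k * y))
  | CY, CY, DY => fun x y t => al t / 2 * (cos (k * x) * sin (2 * k * y))
  | CY, CY, DT => fun x y t => q1 t - al1 t / (4 * k) * (cos (k * x) * cos (2 * k * y))
  end.

Lemma is_pd_two_modes_mat i j d x y t :
  is_pd d (two_modes_mat i j) x y t (two_modes_mat_d i j d x y t).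
Proof.
  destruct i, j, d; simpl;
  (auto_derive; repeat split;
   try apply (ex_derive_of_is_derive _ _ _ Hp); try apply (ex_derive_of_is_derive _ _ _ Hq);
   try apply (ex_derive_of_is_derive _ _ _ Hal); try (intro; lra);
   rewrite ?(Derive_of_is_derive _ _ _ Hp), ?(Derive_of_is_derive _ _ _ Hq),
     ?(Derive_of_is_derive _ _ _ Hal); field; lra).
Qed.

Lemma pd_two_modes_mat i j d : pd d (two_modes_mat i j) = two_modes_mat_d i j d.
Proof. apply pd_eq_of_is_pd; intros; apply is_pd_two_modes_mat. Qed.

Lemma Rabs_prod_le_1 a b : Rabs a <= 1 -> Rabs b <= 1 -> - 1 <= a * b <= 1.
Proof.
  intros; apply Rabs_le_between; replace 1 with (1 * 1) by ring; apply Rabs_mult_le_compat; auto.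
Qed.

Lemma Rabs_div_k_le a c : Rabs a <= c -> Rabs (a / k) <= c / 1000.
Proof.
  intros Ha; unfold Rdiv; rewrite Rabs_mult, Rabs_inv, (Rabs_pos_eq k) by lra.
  apply Rmult_le_compat; auto using Rabs_pos.
  - left; apply Rinv_0_lt_compat; lra.
  - apply Rinv_le_contravar; lra.
Qed.

Lemma two_modes_mat_regular_at x y t :
  (forall t, continuous p1 t) -> (forall t, continuous q1 t) -> (forall t, continuous al1 t) ->
  Rabs (al t) <= 25 -> Rabs (p1 t) <= 1 -> Rabs (q1 t) <= 6 -> Rabs (al1 t) <= 300 ->
  regular_at 60 two_modes_mat x y t.
Proof.
  intros Cp1 Cq1 Cal1 Bal Bp1 Bq1 Bal1.
  assert (Cp : forall t, continuous p t) by (intro; apply (continuous_of_is_derive _ _ _ Hp)).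
  assert (Cq : forall t, continuous q t) by (intro; apply (continuous_of_is_derive _ _ _ Hq)).
  assert (Cal : forall t, continuous al t) by (intro; apply (continuous_of_is_derive _ _ _ Hal)).
  generalize (Rabs_cos_le_1 (k*x)) (Rabs_sin_le_1 (k*x)) (Rabs_cos_le_1 (2*k*y))
    (Rabs_sin_le_1 (2*k*y)); intros c1 s1 c2 s2.
  generalize (Rabs_prod_le_1 _ _ c1 c2) (Rabs_prod_le_1 _ _ s1 s2)
    (Rabs_prod_le_1 _ _ s1 c2) (Rabs_prod_le_1 _ _ c1 s2); intros W1 W2 W3 W4.
  set (w1 := cos (k * x) * cos (2 * k * y)) in *; set (w2 := sin (k * x) * sin (2 * k * y)) in *.
  set (w3 := sin (k * x) * cos (2 * k * y)) in *; set (w4 := cos (k * x) * sin (2 * k * y)) in *.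
  assert (Hv := Rabs_div_k_le _ _ Bal1).
  assert (Hv4 : al1 t / (4 * k) = (al1 t / k) / 4) by (field; lra).
  apply Rabs_le_between in Bal, Bp1, Bq1, Hv.
  intros i j; split; [destruct i, j; simpl; continuous3_tac; auto |].
  intros d; split; [eapply is_pd_pdex, is_pd_two_modes_mat |].
  rewrite pd_two_modes_mat; split.
  - destruct i, j, d; simpl; continuous3_tac; auto.
  - destruct i, j, d; simpl; fold w1 w2 w3 w4; try rewrite Hv4; apply Rabs_le; split; nra.
Qed.

Lemma two_modes_mat_elliptic_at x y t :
  99/100 <= p t <= 1 -> 1/5 <= q t <= 2 -> Rabs (al t) <= 25 ->
  elliptic_at 80 two_modes_mat x y t.
Proof.
  intros Bp Bq Bal xi; unfold quadform, sqnorm, coord_sum; simpl.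
  generalize (Rabs_prod_le_1 _ _ (Rabs_cos_le_1 (k*x)) (Rabs_cos_le_1 (2*k*y))); intros W.
  set (w := cos (k * x) * cos (2 * k * y)) in *.
  assert (Hv := Rabs_div_k_le _ _ Bal).
  assert (Hv4 : al t / (4 * k) = (al t / k) / 4) by (field; lra).
  rewrite Hv4; apply Rabs_le_between in Hv.
  set (v := al t / k) in *.
  assert (A1 : 9/10 <= p t + v * w <= 11/10) by nra.
  assert (A2 : 1/10 <= q t - v / 4 * w <= 21/10) by nra.
  set (a1 := p t + v * w) in *; set (a2 := q t - v / 4 * w) in *.
  set (u1 := xi CX); set (u2 := xi CY).
  replace (u1 * a1 * u1 + u1 * (- v * (sin (k * x) * sin (2 * k * y))) * u2
           + (u2 * (v * (sin (k * x) * sin (2 * k * y))) * u1 + u2 * a2 * u2))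
    with (a1 * u1^2 + a2 * u2^2) by ring.
  split; nra.
Qed.

End TwoModesCoefficients.

(* Given the ODEs, [pde_lhs] is a combination of the [sin^2 + cos^2 - 1]. *)
Lemma pde_lhs_two_modes f g f1 g1 f2 g2 p q al k x y t : k <> 0 ->
  (forall t, is_derive f t (f1 t)) -> (forall t, is_derive g t (g1 t)) ->
  (forall t, is_derive f1 t (f2 t)) -> (forall t, is_derive g1 t (g2 t)) ->
  f2 t = k^2 * p t * f t - k * al t * g t ->
  g2 t = 4 * k^2 * q t * g t + k * al t * f t ->
  pde_lhs (two_modes_mat p q al k) (two_modes f g k) x y t = 0.
Proof.
  intros Hk Hf Hg Hf1 Hg1 Ef Eg; unfold pde_lhs, coord_sum; cbn [dir_of].
  rewrite !(pd_two_modes f g f1 g1 k Hf Hg), (pd_two_modes_d f g f1 g1 f2 g2 k Hf Hg Hf1 Hg1).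
  cbn [two_modes_mat two_modes_d two_modes_dd]; unfold pd.
  repeat match goal with |- context [Derive ?F ?X] =>
    erewrite (is_derive_unique F X); [| auto_derive; [repeat split; auto | reflexivity]] end.
  rewrite Ef, Eg.
  transitivity (- al t * f t * k * cos (2*k*y) * (Rsqr (sin (k*x)) + Rsqr (cos (k*x)) - 1)
                + al t * g t * k * cos (k*x) * (Rsqr (sin (2*k*y)) + Rsqr (cos (2*k*y)) - 1)).
  - unfold Rsqr; field; auto.
  - rewrite !sin2_cos2; ring.
Qed.

(** * Exchanging x and y, and locality in t *)

Definition swap_xy (f : fun3) : fun3 := fun x y t => f y x t.
Definition swap_dir (d : dir) : dir := match d with DX => DY | DY => DX | DT => DT end.
Definition swap_coord (c : coord) : coord := match c with CX => CY | CY => CX end.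
Definition swap_mat (A : matfun) : matfun := fun i j => swap_xy (A (swap_coord i) (swap_coord j)).

Lemma pd_swap_xy d f : pd d (swap_xy f) = swap_xy (pd (swap_dir d) f).
Proof. do 3 (apply functional_extensionality; intro); destruct d; reflexivity. Qed.

Lemma pdex_swap_xy d f x y t : pdex (swap_dir d) f y x t -> pdex d (swap_xy f) x y t.
Proof. destruct d; simpl; auto. Qed.

Lemma cont3_swap_xy f x y t : cont3 f y x t -> cont3 (swap_xy f) x y t.
Proof.
  intros H eps He; destruct (H eps He) as [d [Hd Hc]]; exists d; split; auto.
  intros; unfold swap_xy; apply Hc; auto.
Qed.

Lemma periodic_swap_xy f : periodic_xy f -> periodic_xy (swap_xy f).
Proof. intros H x y t; unfold swap_xy; destruct (H y x t); split; auto. Qed.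

Lemma C2_at_swap_xy u x y t : C2_at u y x t -> C2_at (swap_xy u) x y t.
Proof.
  intros [H1 [H2 [H3 [H4 H5]]]]; repeat split.
  - intros d; apply pdex_swap_xy; auto.
  - intros d1 d2; rewrite pd_swap_xy; apply pdex_swap_xy; auto.
  - apply cont3_swap_xy; auto.
  - intros d; rewrite pd_swap_xy; apply cont3_swap_xy; auto.
  - intros d1 d2; rewrite !pd_swap_xy; apply cont3_swap_xy; auto.
Qed.

Lemma C2_bounded_at_swap_xy u M x y t :
  C2_bounded_at u M y x t -> C2_bounded_at (swap_xy u) M x y t.
Proof.
  intros [H1 [H2 H3]]; repeat split; [| intros d | intros d1 d2];
    rewrite ?pd_swap_xy; unfold swap_xy; auto.
Qed.

Lemma regular_at_swap_mat C A x y t : regular_at C A y x t -> regular_at C (swap_mat A) x y t.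
Proof.
  intros H i j; destruct (H (swap_coord i) (swap_coord j)) as [H1 H2]; split.
  - apply cont3_swap_xy; auto.
  - intros d; destruct (H2 (swap_dir d)) as [H3 [H4 H5]]; unfold swap_mat; rewrite pd_swap_xy.
    repeat split; [apply pdex_swap_xy | apply cont3_swap_xy | unfold swap_xy]; auto.
Qed.

Lemma elliptic_at_swap_mat Lam A x y t :
  elliptic_at Lam A y x t -> elliptic_at Lam (swap_mat A) x y t.
Proof.
  intros H xi; specialize (H (fun c => xi (swap_coord c))).
  unfold quadform, sqnorm, coord_sum, swap_mat, swap_xy in *; simpl in *; lra.
Qed.

Lemma pde_lhs_swap A u x y t : pde_lhs (swap_mat A) (swap_xy u) x y t = pde_lhs A u y x t.
Proof. unfold pde_lhs, coord_sum, pd, swap_mat, swap_xy; simpl; ring. Qed.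

Definition eq_on_slab (f g : fun3) lo hi := forall x y t, lo < t < hi -> f x y t = g x y t.

Lemma locally_of_slab lo hi t (P : R -> Prop) :
  lo < t < hi -> (forall s, lo < s < hi -> P s) -> locally t P.
Proof. intros Ht H; apply (locally_interval _ t lo hi); simpl; try lra; intros; apply H; lra. Qed.

Lemma pd_eq_on_slab d f g lo hi : eq_on_slab f g lo hi -> eq_on_slab (pd d f) (pd d g) lo hi.
Proof.
  intros H x y t Ht; destruct d; simpl.
  - apply Derive_ext; intros; apply H; auto.
  - apply Derive_ext; intros; apply H; auto.
  - apply Derive_ext_loc, (locally_of_slab lo hi); auto; intros; apply H; auto.
Qed.

Lemma pdex_eq_on_slab d f g lo hi x y t :
  eq_on_slab f g lo hi -> lo < t < hi -> pdex d g x y t -> pdex d f x y t.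
Proof.
  intros H Ht Hg; destruct d; simpl in *.
  - eapply ex_derive_ext; [| apply Hg]; intros; simpl; symmetry; apply H; auto.
  - eapply ex_derive_ext; [| apply Hg]; intros; simpl; symmetry; apply H; auto.
  - eapply ex_derive_ext_loc; [| apply Hg].
    apply (locally_of_slab lo hi); auto; intros; symmetry; apply H; auto.
Qed.

Lemma cont3_eq_on_slab f g lo hi x y t :
  eq_on_slab f g lo hi -> lo < t < hi -> cont3 g x y t -> cont3 f x y t.
Proof.
  intros H Ht Hg eps He; destruct (Hg eps He) as [d [Hd Hc]].
  exists (Rmin d (Rmin (t - lo) (hi - t))); split.
  - apply Rmin_pos; auto; apply Rmin_pos; lra.
  - intros x' y' t' H1 H2 H3.
    assert (Hm1 := Rmin_l d (Rmin (t - lo) (hi - t))).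
    assert (Hm2 := Rmin_r d (Rmin (t - lo) (hi - t))).
    assert (Hm3 := Rmin_l (t - lo) (hi - t)); assert (Hm4 := Rmin_r (t - lo) (hi - t)).
    apply Rabs_def2 in H3 as H3'.
    rewrite (H x' y' t'), (H x y t) by lra; apply Hc; lra.
Qed.

Lemma C2_at_eq_on_slab u v lo hi x y t :
  eq_on_slab u v lo hi -> lo < t < hi -> C2_at v x y t -> C2_at u x y t.
Proof.
  intros E Ht [H1 [H2 [H3 [H4 H5]]]].
  assert (E1 : forall d, eq_on_slab (pd d u) (pd d v) lo hi) by (intros; apply pd_eq_on_slab; auto).
  repeat split.
  - intros d; eapply pdex_eq_on_slab; eauto.
  - intros d1 d2; eapply pdex_eq_on_slab; eauto.
  - eapply cont3_eq_on_slab; eauto.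
  - intros d; eapply cont3_eq_on_slab; eauto.
  - intros d1 d2; eapply cont3_eq_on_slab; [apply pd_eq_on_slab | |]; eauto.
Qed.

Lemma C2_bounded_at_eq_on_slab u v M lo hi x y t :
  eq_on_slab u v lo hi -> lo < t < hi -> C2_bounded_at v M x y t -> C2_bounded_at u M x y t.
Proof.
  intros E Ht [H1 [H2 H3]].
  repeat split; [| intros d | intros d1 d2];
    rewrite ?(pd_eq_on_slab _ _ _ _ _ (pd_eq_on_slab _ _ _ _ _ E)),
      ?(pd_eq_on_slab _ _ _ _ _ E), ?E;
    auto.
Qed.

Lemma regular_at_eq_on_slab C A B lo hi x y t :
  (forall i j, eq_on_slab (A i j) (B i j) lo hi) -> lo < t < hi ->
  regular_at C B x y t -> regular_at C A x y t.
Proof.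
  intros E Ht H i j; destruct (H i j) as [H1 H2]; split; [eapply cont3_eq_on_slab; eauto |].
  intros d; destruct (H2 d) as [H3 [H4 H5]].
  assert (E1 : eq_on_slab (pd d (A i j)) (pd d (B i j)) lo hi) by (apply pd_eq_on_slab; auto).
  repeat split; [eapply pdex_eq_on_slab | eapply cont3_eq_on_slab | rewrite E1]; eauto.
Qed.

Lemma pde_lhs_eq_on_slab A B u v lo hi x y t :
  eq_on_slab u v lo hi -> (forall i j, eq_on_slab (A i j) (B i j) lo hi) ->
  lo < t < hi -> pde_lhs A u x y t = pde_lhs B v x y t.
Proof.
  intros Eu EA Ht; unfold pde_lhs.
  rewrite (pd_eq_on_slab _ _ _ lo hi (pd_eq_on_slab _ _ _ lo hi Eu)) by auto; f_equal.
  assert (G : forall i j, eq_on_slab (fun x' y' t' => A i j x' y' t' * pd (dir_of j) u x' y' t')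
                                     (fun x' y' t' => B i j x' y' t' * pd (dir_of j) v x' y' t') lo hi).
  { intros i j x' y' t' H; rewrite EA, (pd_eq_on_slab _ u v lo hi Eu) by auto; reflexivity. }
  unfold coord_sum; rewrite !(pd_eq_on_slab _ _ _ lo hi (G _ _)) by auto; reflexivity.
Qed.

(** * One window *)

Definition shift (h : R -> R) (c : R) : R -> R := fun t => h (t - c).

Lemma is_derive_shift (h h' : R -> R) c :
  (forall t, is_derive h t (h' t)) -> forall t, is_derive (shift h c) t (shift h' c t).
Proof.
  intros H t; unfold shift; auto_derive; [apply (ex_derive_of_is_derive _ _ _ H) |].
  rewrite (Derive_of_is_derive _ _ _ H); unfold Rminus; ring.
Qed.

Lemma continuous_shift (h : R -> R) c :
  (forall t, continuous h t) -> forall t, continuous (shift h c) t.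
Proof.
  intros H t; apply (continuous_comp (fun t => t - c) h); [| apply H].
  apply continuous_of_ex_derive; intros; auto_derive; auto.
Qed.

Definition window_u a k c : fun3 := two_modes (shift (prof_f a k) c) (shift (prof_g a k) c) k.
Definition window_A k c : matfun :=
  two_modes_mat (shift (coef_p k) c) (shift (coef_q k) c) (shift (coef_al k) c) k.

Ltac window_derivatives :=
  apply is_derive_shift; intros;
  first [ apply is_derive_prof_f | apply is_derive_prof_g | apply is_derive_prof_f1
        | apply is_derive_prof_g1 | apply is_derive_coef_p | apply is_derive_coef_q
        | apply is_derive_coef_al ]; lra.

Ltac window_continuity :=
  apply continuous_shift; intros;
  first [ apply continuous_prof_f2 | apply continuous_prof_g2 | apply continuous_coef_p1
        | apply continuous_coef_q1 | apply continuous_coef_al1 ].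

Lemma window_u_C2_at a k c x y t : C2_at (window_u a k c) x y t.
Proof.
  apply two_modes_C2_at with (shift (prof_f1 a k) c) (shift (prof_g1 a k) c)
    (shift (prof_f2 a k) c) (shift (prof_g2 a k) c);
    first [window_derivatives | window_continuity].
Qed.

Lemma window_u_bounded_at a k c x y t : 1000 <= k -> 0 < a -> c <= t ->
  C2_bounded_at (window_u a k c) (48 * k^4 * a) x y t.
Proof.
  intros Hk Ha Ht.
  replace (48 * k^4 * a) with (8 * k^2 * (a * (6 * k^2))) by ring.
  destruct (profile_bounds a k (t - c) Hk) as [B0 [B1 [B2 [B3 [B4 B5]]]]].
  assert (HB : Rabs a * exp (- (k * (t - c))) * (6 * k ^ 2) <= a * (6 * k^2)).
  { rewrite Rabs_pos_eq by lra; apply Rmult_le_compat_r; [nra |].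
    rewrite <- (Rmult_1_r a) at 2; apply Rmult_le_compat_l; [lra |].
    rewrite <- exp_0; apply exp_le_compat; nra. }
  apply two_modes_bounded_at with (shift (prof_f1 a k) c) (shift (prof_g1 a k) c)
    (shift (prof_f2 a k) c) (shift (prof_g2 a k) c);
    try window_derivatives; unfold shift; lra.
Qed.

Lemma window_A_regular_at k c x y t : 1000 <= k -> regular_at 60 (window_A k c) x y t.
Proof.
  intros Hk; destruct (coef_bounds k (t - c) Hk) as [_ [_ [Bal [Bp1 [Bq1 Bal1]]]]].
  apply two_modes_mat_regular_at with (shift (coef_p1 k) c) (shift (coef_q1 k) c)
    (shift (coef_al1 k) c); auto; first [window_derivatives | window_continuity].
Qed.

Lemma window_A_elliptic_at k c x y t : 1000 <= k -> elliptic_at 80 (window_A k c) x y t.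
Proof.
  intros Hk; destruct (coef_bounds k (t - c) Hk) as [Hp [Hq [Bal _]]].
  apply two_modes_mat_elliptic_at; auto.
Qed.

Lemma pde_lhs_window a k c x y t : k <> 0 -> pde_lhs (window_A k c) (window_u a k c) x y t = 0.
Proof.
  intros Hk.
  apply pde_lhs_two_modes with (shift (prof_f1 a k) c) (shift (prof_g1 a k) c)
    (shift (prof_f2 a k) c) (shift (prof_g2 a k) c); auto; try window_derivatives.
  - apply prof_f_ode; auto.
  - apply prof_g_ode; auto.
Qed.

(** * Gluing the windows *)

Definition t_start (n : nat) : R := 5 * (INR n - 1).
Definition window_of (t : R) : nat := Z.to_nat (up (t / 5)).

Lemma t_start_S n : t_start (S n) = t_start n + 5.
Proof. unfold t_start; rewrite S_INR; ring. Qed.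

Lemma t_start_ge0 n : (1 <= n)%nat -> 0 <= t_start n.
Proof. intros Hn; unfold t_start; apply le_INR in Hn; simpl in Hn; lra. Qed.

Lemma window_of_spec n t : (1 <= n)%nat -> t_start n <= t < t_start n + 5 -> window_of t = n.
Proof.
  intros Hn Ht; unfold window_of, t_start in *.
  assert (E : Z.of_nat n = up (t / 5)) by (apply tech_up; rewrite <- INR_IZR_INZ; lra).
  rewrite <- E; apply Nat2Z.id.
Qed.

Lemma window_of_correct t : 0 <= t ->
  (1 <= window_of t)%nat /\ t_start (window_of t) <= t < t_start (window_of t) + 5.
Proof.
  intros Ht; destruct (archimed (t / 5)) as [H1 H2].
  assert (Hz : (0 < up (t / 5))%Z) by (apply lt_IZR; simpl; lra).
  unfold window_of, t_start; rewrite INR_IZR_INZ, Z2Nat.id by lia.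
  split; [lia | lra].
Qed.

Lemma window_of_near n m t : (1 <= n)%nat -> (1 <= m)%nat -> t_start m <= t < t_start m + 5 ->
  t_start n - 1 < t < t_start n + 6 -> m = n \/ m = S n \/ S m = n.
Proof.
  intros Hn Hm H1 H2; unfold t_start in *.
  assert (A1 : INR m < INR (n + 2)) by (rewrite plus_INR; simpl; lra).
  assert (A2 : INR n < INR (m + 2)) by (rewrite plus_INR; simpl; lra).
  apply INR_lt in A1, A2; lia.
Qed.

Lemma kk_S n0 n : (1 <= n)%nat -> kk n0 (S n) = 2 * kk n0 n.
Proof. intros; unfold kk; replace (S n + n0 - 1)%nat with (S (n + n0 - 1)) by lia; simpl; ring. Qed.

Lemma kk_pos n0 n : 0 < kk n0 n.
Proof. unfold kk; apply pow_lt; lra. Qed.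

Lemma kk_ge_1000 n0 n : (10 <= n0)%nat -> (1 <= n)%nat -> 1000 <= kk n0 n.
Proof.
  intros; unfold kk; apply Rle_trans with (2 ^ 10); [simpl; lra | apply Rle_pow; [lra | lia]].
Qed.

(* At the end of window [n] the profile is [amp_n e^{-k_n (2 s - 7/2)}] with
   [s = t - t_n]; it matches the start [amp_{n+1} e^{-2 k_n (s - 5)}] of window
   [n + 1] iff [amp_{n+1} = amp_n e^{-13/2 k_n}]. *)
Definition amp n0 n := exp (- (13/2) * (kk n0 n - kk n0 1)).
Definition c_coef n0 n := amp n0 n * exp (kk n0 n * t_start n).

Lemma amp_S n0 n : (1 <= n)%nat -> amp n0 (S n) = amp n0 n * exp (- (13/2) * kk n0 n).
Proof. intros; unfold amp; rewrite kk_S, <- exp_plus by auto; f_equal; ring. Qed.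

Lemma amp_pos n0 n : 0 < amp n0 n.
Proof. apply exp_pos. Qed.

Definition u_win n0 n : fun3 :=
  if Nat.odd n then window_u (amp n0 n) (kk n0 n) (t_start n)
  else swap_xy (window_u (amp n0 n) (kk n0 n) (t_start n)).
Definition A_win n0 n : matfun :=
  if Nat.odd n then window_A (kk n0 n) (t_start n) else swap_mat (window_A (kk n0 n) (t_start n)).

Definition u_glued n0 : fun3 := fun x y t => u_win n0 (window_of t) x y t.
Definition A_glued n0 : matfun := fun i j x y t => A_win n0 (window_of t) i j x y t.

Definition id_entry (i j : coord) : R := match i, j with CX, CX | CY, CY => 1 | _, _ => 0 end.

Lemma window_A_id k c x y t i j : k <> 0 -> t - c <= 1 \/ 4 <= t - c ->
  window_A k c i j x y t = id_entry i j.
Proof.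
  intros Hk [H | H];
    [destruct (profile_start 1 k (t - c) Hk H) as [_ [_ [Hp [Hq Hal]]]]
    | destruct (profile_end 1 k (t - c) Hk H) as [_ [_ [Hp [Hq Hal]]]]];
    unfold window_A, two_modes_mat, shift; destruct i, j; simpl;
    rewrite ?Hp, ?Hq, ?Hal; field; auto.
Qed.

Lemma A_win_id n0 n x y t i j : (1 <= n)%nat -> t - t_start n <= 1 \/ 4 <= t - t_start n ->
  A_win n0 n i j x y t = id_entry i j.
Proof.
  intros Hn H; assert (Hk : kk n0 n <> 0) by (generalize (kk_pos n0 n); lra).
  unfold A_win; destruct (Nat.odd n); [apply window_A_id; auto |].
  unfold swap_mat, swap_xy; rewrite window_A_id; auto; destruct i, j; reflexivity.
Qed.

Lemma u_win_modes n0 n x y t : (1 <= n)%nat ->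
  u_win n0 n x y t =
    shift (prof_f (amp n0 n) (kk n0 n)) (t_start n) t * cos (kk n0 n * svar n x y)
  + shift (prof_g (amp n0 n) (kk n0 n)) (t_start n) t * cos (kk n0 (S n) * svar (S n) x y).
Proof.
  intros Hn; rewrite (kk_S n0 n Hn); unfold u_win, window_u, two_modes, svar, swap_xy.
  rewrite Nat.odd_succ, <- Nat.negb_odd; destruct (Nat.odd n); reflexivity.
Qed.

Lemma u_win_junction n0 n x y t : (1 <= n)%nat -> t_start (S n) - 1 <= t <= t_start (S n) + 1 ->
  u_win n0 n x y t = u_win n0 (S n) x y t.
Proof.
  intros Hn Ht; rewrite t_start_S in Ht.
  rewrite (u_win_modes n0 n), (u_win_modes n0 (S n)) by lia; unfold shift.
  assert (Hk : kk n0 n <> 0) by (generalize (kk_pos n0 n); lra).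
  assert (Hk' : kk n0 (S n) <> 0) by (generalize (kk_pos n0 (S n)); lra).
  destruct (profile_end (amp n0 n) (kk n0 n) (t - t_start n) Hk) as [E1 [E2 _]]; [lra |].
  destruct (profile_start (amp n0 (S n)) (kk n0 (S n)) (t - t_start (S n)) Hk')
    as [E3 [E4 _]]; [rewrite t_start_S; lra |].
  rewrite E1, E2, E3, E4, amp_S, kk_S, t_start_S by auto.
  rewrite (Rmult_assoc (amp n0 n) (exp _) (exp _)), <- exp_plus.
  replace (- (13 / 2) * kk n0 n + - (2 * kk n0 n * (t - (t_start n + 5))))
    with (- (kk n0 n * (2 * (t - t_start n) - 7 / 2))) by field.
  ring.
Qed.

Lemma A_win_junction n0 n x y t i j : (1 <= n)%nat -> t_start (S n) - 1 <= t <= t_start (S n) + 1 ->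
  A_win n0 n i j x y t = A_win n0 (S n) i j x y t.
Proof.
  intros Hn Ht; rewrite t_start_S in Ht.
  rewrite (A_win_id n0 n), (A_win_id n0 (S n)); rewrite ?t_start_S; auto; lra.
Qed.

Lemma glued_eq_on_slab n0 t : 0 < t ->
  exists lo hi, lo < t < hi /\ eq_on_slab (u_glued n0) (u_win n0 (window_of t)) lo hi /\
    (forall i j, eq_on_slab (A_glued n0 i j) (A_win n0 (window_of t) i j) lo hi).
Proof.
  intros Ht; destruct (window_of_correct t) as [Hn Hs]; [lra |].
  set (n := window_of t) in *.
  exists (Rmax 0 (t_start n - 1)), (t_start n + 6).
  assert (Hlo0 := Rmax_l 0 (t_start n - 1)); assert (Hlo1 := Rmax_r 0 (t_start n - 1)).
  assert (Key : forall s, Rmax 0 (t_start n - 1) < s < t_start n + 6 ->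
     (forall x y, u_win n0 (window_of s) x y s = u_win n0 n x y s) /\
     (forall i j x y, A_win n0 (window_of s) i j x y s = A_win n0 n i j x y s)).
  { intros s Hs'; destruct (window_of_correct s) as [Hm Hms]; [lra |].
    set (m := window_of s) in *; clearbody m n.
    destruct (window_of_near n m s Hn Hm Hms) as [-> | [-> | <-]]; [lra | auto | |].
    - rewrite t_start_S in Hms.
      split; intros; symmetry; [apply u_win_junction | apply A_win_junction];
        rewrite ?t_start_S; auto; lra.
    - rewrite t_start_S in *.
      split; intros; [apply u_win_junction | apply A_win_junction]; rewrite ?t_start_S; auto; lra. }
  split; [split; [apply Rmax_lub_lt |]; lra |].
  split; [intros x y s Hs' | intros i j x y s Hs'];
    [apply (proj1 (Key _ Hs')) | apply (proj2 (Key _ Hs'))].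
Qed.

Lemma amp_kk4_le n0 n : (1 <= n)%nat -> kk n0 n ^ 4 * amp n0 n <= exp (13/2 * kk n0 1).
Proof.
  intros Hn; generalize (kk_pos n0 n); intros Hk.
  assert (H1 : kk n0 n ^ 4 <= exp (4 * kk n0 n)).
  { replace (exp (4 * kk n0 n)) with (exp (kk n0 n) ^ 4).
    - apply pow_incr; split; [lra |]; generalize (exp_ineq1_le (kk n0 n)); lra.
    - replace (4 * kk n0 n) with (kk n0 n + kk n0 n + kk n0 n + kk n0 n) by ring.
      rewrite !exp_plus; ring. }
  unfold amp; apply Rle_trans with (exp (4 * kk n0 n) * exp (- (13 / 2) * (kk n0 n - kk n0 1))).
  - apply Rmult_le_compat_r; [left; apply exp_pos | auto].
  - rewrite <- exp_plus; apply exp_le_compat; lra.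
Qed.

Section Glued.

Variable n0 : nat.
Hypothesis Hn0 : (10 <= n0)%nat.

Lemma C2_at_u_glued x y t : 0 < t -> C2_at (u_glued n0) x y t.
Proof.
  intros Ht; destruct (glued_eq_on_slab n0 t Ht) as (lo & hi & Hlt & E & _).
  eapply C2_at_eq_on_slab; eauto.
  unfold u_win; destruct (Nat.odd _); [| apply C2_at_swap_xy]; apply window_u_C2_at.
Qed.

Lemma C2_bounded_at_u_glued x y t : 0 < t ->
  C2_bounded_at (u_glued n0) (48 * exp (13/2 * kk n0 1)) x y t.
Proof.
  intros Ht; destruct (glued_eq_on_slab n0 t Ht) as (lo & hi & Hlt & E & _).
  destruct (window_of_correct t) as [Hn Hs]; [lra |].
  eapply C2_bounded_at_eq_on_slab; eauto.
  set (n := window_of t) in *.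
  assert (Hb := amp_kk4_le n0 n Hn).
  assert (Hw : forall x y t, t_start n <= t ->
            C2_bounded_at (window_u (amp n0 n) (kk n0 n) (t_start n))
              (48 * exp (13/2 * kk n0 1)) x y t).
  { intros x' y' t' Ht'; destruct (window_u_bounded_at (amp n0 n) (kk n0 n) (t_start n) x' y' t')
      as [B1 [B2 B3]]; auto using kk_ge_1000, amp_pos.
    repeat split; [| intros d | intros d1 d2]; [| specialize (B2 d) | specialize (B3 d1 d2)]; lra. }
  unfold u_win; destruct (Nat.odd n); [| apply C2_bounded_at_swap_xy]; apply Hw; lra.
Qed.

Lemma regular_at_A_glued x y t : 0 < t -> regular_at 60 (A_glued n0) x y t.
Proof.
  intros Ht; destruct (glued_eq_on_slab n0 t Ht) as (lo & hi & Hlt & _ & E).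
  destruct (window_of_correct t) as [Hn _]; [lra |].
  eapply regular_at_eq_on_slab; eauto.
  unfold A_win; destruct (Nat.odd _); [| apply regular_at_swap_mat];
    apply window_A_regular_at, kk_ge_1000; auto.
Qed.

Lemma elliptic_at_A_glued x y t : 0 <= t -> elliptic_at 80 (A_glued n0) x y t.
Proof.
  intros Ht; destruct (window_of_correct t) as [Hn _]; auto.
  change (elliptic_at 80 (A_win n0 (window_of t)) x y t).
  unfold A_win; destruct (Nat.odd _); [| apply elliptic_at_swap_mat];
    apply window_A_elliptic_at, kk_ge_1000; auto.
Qed.

Lemma pde_lhs_glued x y t : 0 < t -> pde_lhs (A_glued n0) (u_glued n0) x y t = 0.
Proof.
  intros Ht; destruct (glued_eq_on_slab n0 t Ht) as (lo & hi & Hlt & E1 & E2).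
  rewrite (pde_lhs_eq_on_slab _ _ _ _ _ _ x y t E1 E2 Hlt).
  assert (Hk := kk_pos n0 (window_of t)).
  unfold A_win, u_win; destruct (Nat.odd _); [| rewrite pde_lhs_swap]; apply pde_lhs_window; lra.
Qed.

End Glued.

Lemma cos_INR_periodic m x : cos (INR m * (x + 2 * PI)) = cos (INR m * x).
Proof.
  replace (INR m * (x + 2 * PI)) with (INR m * x + 2 * INR m * PI) by ring; apply cos_period.
Qed.
Lemma sin_INR_periodic m x : sin (INR m * (x + 2 * PI)) = sin (INR m * x).
Proof.
  replace (INR m * (x + 2 * PI)) with (INR m * x + 2 * INR m * PI) by ring; apply sin_period.
Qed.

Lemma double_INR m : 2 * INR m = INR (2 * m).
Proof. rewrite mult_INR; simpl; ring. Qed.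

Lemma periodic_window_u a m c : periodic_xy (window_u a (INR m) c).
Proof.
  intros x y t; unfold window_u, two_modes.
  rewrite double_INR, !cos_INR_periodic; split; reflexivity.
Qed.

Lemma periodic_window_A m c i j : periodic_xy (window_A (INR m) c i j).
Proof.
  intros x y t; unfold window_A, two_modes_mat; rewrite double_INR;
    destruct i, j; rewrite ?cos_INR_periodic, ?sin_INR_periodic; split; reflexivity.
Qed.

Lemma kk_INR n0 n : kk n0 n = INR (2 ^ (n + n0 - 1)).
Proof. unfold kk; rewrite pow_INR; reflexivity. Qed.

Lemma periodic_u_glued n0 : periodic_xy (u_glued n0).
Proof.
  intros x y t; unfold u_glued, u_win; rewrite kk_INR.
  destruct (Nat.odd _); [| apply periodic_swap_xy]; apply periodic_window_u.
Qed.

Lemma periodic_A_glued n0 i j : periodic_xy (A_glued n0 i j).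
Proof.
  intros x y t; unfold A_glued, A_win; rewrite kk_INR.
  destruct (Nat.odd _); [| apply periodic_swap_xy]; apply periodic_window_A.
Qed.

Lemma glued_on_window n0 n x y t : (1 <= n)%nat -> t_start n <= t <= t_start (S n) ->
  u_glued n0 x y t = u_win n0 n x y t /\ forall i j, A_glued n0 i j x y t = A_win n0 n i j x y t.
Proof.
  intros Hn Ht; rewrite t_start_S in Ht; unfold u_glued, A_glued.
  destruct (Rlt_dec t (t_start n + 5)).
  - rewrite (window_of_spec n t) by (auto; lra); auto.
  - rewrite (window_of_spec (S n) t) by (auto; rewrite t_start_S; lra).
    split; intros; symmetry; [apply u_win_junction | apply A_win_junction];
      auto; rewrite t_start_S; lra.
Qed.

Lemma u_glued_modes n0 n x y t : (1 <= n)%nat -> t_start n <= t <= t_start (S n) ->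
  u_glued n0 x y t =
    shift (prof_f (amp n0 n) (kk n0 n)) (t_start n) t * cos (kk n0 n * svar n x y)
  + shift (prof_g (amp n0 n) (kk n0 n)) (t_start n) t * cos (kk n0 (S n) * svar (S n) x y).
Proof. intros Hn Ht; rewrite (proj1 (glued_on_window n0 n x y t Hn Ht)), u_win_modes; auto. Qed.

Lemma glued_window_start n0 n x y t : (1 <= n)%nat -> t_start n <= t <= t_start n + 1/100 ->
  u_glued n0 x y t = c_coef n0 n * cos (kk n0 n * svar n x y) * exp (- kk n0 n * t) /\
  A_id (A_glued n0) x y t.
Proof.
  intros Hn Ht; assert (Hk : kk n0 n <> 0) by (generalize (kk_pos n0 n); lra).
  destruct (glued_on_window n0 n x y t Hn) as [E1 E2]; [rewrite t_start_S; lra |].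
  split; [| intros i j; rewrite E2, A_win_id by (auto; lra); destruct i, j; reflexivity].
  rewrite E1, u_win_modes by auto; unfold shift.
  destruct (profile_start (amp n0 n) (kk n0 n) (t - t_start n) Hk) as [F1 [F2 _]]; [lra |].
  rewrite F1, F2; unfold c_coef.
  replace (- (kk n0 n * (t - t_start n))) with (kk n0 n * t_start n + - kk n0 n * t) by ring.
  rewrite exp_plus; ring.
Qed.

Lemma glued_window_end n0 n x y t : (1 <= n)%nat -> t_start (S n) - 1/100 <= t <= t_start (S n) ->
  u_glued n0 x y t =
    c_coef n0 (S n) * cos (kk n0 (S n) * svar (S n) x y) * exp (- kk n0 (S n) * t) /\
  A_id (A_glued n0) x y t.
Proof.
  intros Hn Ht; assert (Hk : kk n0 n <> 0) by (generalize (kk_pos n0 n); lra).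
  rewrite t_start_S in Ht.
  destruct (glued_on_window n0 n x y t Hn) as [E1 E2]; [rewrite t_start_S; lra |].
  split; [| intros i j; rewrite E2, A_win_id by (auto; lra); destruct i, j; reflexivity].
  rewrite E1, u_win_modes by auto; unfold shift.
  destruct (profile_end (amp n0 n) (kk n0 n) (t - t_start n) Hk) as [F1 [F2 _]]; [lra |].
  rewrite F1, F2; unfold c_coef; rewrite amp_S, t_start_S, kk_S by auto.
  replace (exp (- (kk n0 n * (2 * (t - t_start n) - 7 / 2))))
    with (exp (- (13 / 2) * kk n0 n) * exp (2 * kk n0 n * (t_start n + 5))
          * exp (- (2 * kk n0 n) * t))
    by (rewrite <- !exp_plus; f_equal; field).
  ring.
Qed.

(** * Profiles and decay *)

Lemma uniformly_C2_1_of_derivatives (h h1 h2 : R -> R) M :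
  (forall t, is_derive h t (h1 t)) -> (forall t, is_derive h1 t (h2 t)) ->
  (forall t, continuous h2 t) ->
  (forall t, 0 < t -> Rabs (h t) <= M /\ Rabs (h1 t) <= M /\ Rabs (h2 t) <= M) ->
  uniformly_C2_1 h.
Proof.
  intros H1 H2 C B.
  assert (D1 : Derive h = h1)
    by (apply functional_extensionality; intro; apply is_derive_unique, H1).
  assert (D2 : Derive h1 = h2)
    by (apply functional_extensionality; intro; apply is_derive_unique, H2).
  split; [| exists M; intros t Ht; rewrite D1, D2; auto].
  intros t Ht; rewrite D1, D2; repeat split; [eexists; apply H1 | eexists; apply H2 | ..];
    apply continuity_pt_filterlim;
    [apply (continuous_of_is_derive _ _ _ H1) | apply (continuous_of_is_derive _ _ _ H2) | apply C].
Qed.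

Lemma uniformly_C2_1_window_profiles a k c : 1000 <= k -> 0 < a -> 0 <= c ->
  uniformly_C2_1 (shift (prof_f a k) c) /\ uniformly_C2_1 (shift (prof_g a k) c).
Proof.
  intros Hk Ha Hc.
  assert (B : forall t, 0 < t ->
            Rabs a * exp (- (k * (t - c))) * (6 * k ^ 2) <= a * exp (k * c) * (6 * k^2)).
  { intros t Ht; rewrite Rabs_pos_eq by lra; apply Rmult_le_compat_r; [nra |].
    apply Rmult_le_compat_l; [lra |]; apply exp_le_compat; nra. }
  split; [ apply uniformly_C2_1_of_derivatives with (shift (prof_f1 a k) c)
             (shift (prof_f2 a k) c) (a * exp (k * c) * (6 * k^2))
          | apply uniformly_C2_1_of_derivatives with (shift (prof_g1 a k) c)
             (shift (prof_g2 a k) c) (a * exp (k * c) * (6 * k^2)) ];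
    try window_derivatives; try window_continuity;
    intros t Ht; specialize (B t Ht);
    destruct (profile_bounds a k (t - c) Hk) as (? & ? & ? & ? & ? & ?);
    unfold shift; repeat split; lra.
Qed.

Lemma Rabs_prof_le_amp a k t : 0 < k -> 0 < a -> 0 <= t ->
  Rabs (prof_f a k t) <= a /\ Rabs (prof_g a k t) <= a.
Proof.
  intros Hk Ha Ht.
  assert (E : 0 < exp (- phase k t) <= 1).
  { split; [apply exp_pos |].
    rewrite <- exp_0; apply exp_le_compat; generalize (phase_ge k t Hk); nra. }
  unfold prof_f, prof_g; split;
    (apply Rle_trans with (a * 1 * 1); [| lra]);
    (apply Rabs_mult_le_compat; [apply Rabs_mult_le_compat; rewrite Rabs_pos_eq; lra |]);
    auto using Rabs_cos_le_1, Rabs_sin_le_1.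
Qed.

Lemma exp_half_INR_le n : exp (INR n / 2) <= 2 ^ n.
Proof.
  assert (H : exp (1/2) <= 2).
  { assert (E : exp (1/2) * exp (1/2) = exp 1) by (rewrite <- exp_plus; f_equal; field).
    generalize exp_le_3 (exp_pos (1/2)); nra. }
  induction n.
  - simpl; replace (0/2) with 0 by field; rewrite exp_0; lra.
  - rewrite S_INR; replace ((INR n + 1)/2) with (INR n / 2 + 1/2) by field.
    rewrite exp_plus; simpl; generalize (exp_pos (INR n / 2)) (exp_pos (1/2)); nra.
Qed.

Lemma amp_decay n0 n T : (10 <= n0)%nat -> (2 <= n)%nat -> T < 5 * INR n ->
  amp n0 n <= exp (- (1/10) * exp (1/10 * T)).
Proof.
  intros H0 Hn HT; unfold amp; apply exp_le_compat.
  assert (E1 : exp (1/10 * T) <= 2 ^ n).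
  { eapply Rle_trans; [| apply exp_half_INR_le]; apply exp_le_compat; lra. }
  assert (Ek : kk n0 n = 2 ^ n * 2 ^ (n0 - 1)) by (unfold kk; rewrite <- pow_add; f_equal; lia).
  assert (Ek1 : kk n0 1 = 2 * 2 ^ (n0 - 1))
    by (unfold kk; replace (1 + n0 - 1)%nat with (S (n0 - 1)) by lia; simpl; ring).
  assert (P : 2 <= 2 ^ (n0 - 1)) by (replace 2 with (2^1) at 1 by ring; apply Rle_pow; [lra | lia]).
  assert (Q : 4 <= 2 ^ n) by (replace 4 with (2^2) by ring; apply Rle_pow; [lra | lia]).
  rewrite Ek, Ek1; nra.
Qed.

Lemma u_glued_decay n0 T x y t : (10 <= n0)%nat -> 5 <= T -> T <= t ->
  Rabs (u_glued n0 x y t) <= 2 * exp (- (1/10) * exp (1/10 * T)).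
Proof.
  intros H0 HT Ht; destruct (window_of_correct t) as [Hn Hs]; [lra |].
  set (n := window_of t) in *; clearbody n.
  assert (Hn2 : (2 <= n)%nat).
  { unfold t_start in Hs; assert (INR 1 < INR n) by (simpl; lra); apply INR_lt in H; lia. }
  rewrite (u_glued_modes n0 n) by (auto; rewrite t_start_S; lra); unfold shift.
  destruct (Rabs_prof_le_amp (amp n0 n) (kk n0 n) (t - t_start n)) as [F G];
    auto using kk_pos, amp_pos; [lra |].
  assert (D := amp_decay n0 n T H0 Hn2 ltac:(unfold t_start in Hs; lra)).
  apply Rle_trans with (amp n0 n * 1 + amp n0 n * 1); [| lra].
  apply Rabs_plus_le_compat; apply Rabs_mult_le_compat; auto using Rabs_cos_le_1.
Qed.

Lemma t_start_unbounded (M : R) : exists n1, forall n, (n1 <= n)%nat -> M < t_start n.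
Proof.
  destruct (archimed (Rabs M)) as [H1 H2].
  assert (Hz : (0 <= up (Rabs M))%Z) by (apply le_IZR; generalize (Rabs_pos M); simpl; lra).
  exists (S (Z.to_nat (up (Rabs M)))); intros n Hn.
  apply le_INR in Hn; rewrite S_INR, INR_IZR_INZ, Z2Nat.id in Hn by auto.
  unfold t_start; generalize (Rle_abs M) (Rabs_pos M); lra.
Qed.

Lemma reg_class_A_glued n0 : (10 <= n0)%nat -> reg_class 80 60 (A_glued n0).
Proof.
  intros Hn0; split; [| split].
  - apply periodic_A_glued.
  - intros x y t Ht; apply elliptic_at_A_glued; auto.
  - intros i j x y t Ht; apply regular_at_A_glued; auto.
Qed.

Lemma uniformly_C2_u_glued n0 : (10 <= n0)%nat -> uniformly_C2 (u_glued n0).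
Proof.
  intros Hn0; split; [intros; apply C2_at_u_glued; auto |].
  exists (48 * exp (13/2 * kk n0 1)); intros; apply C2_bounded_at_u_glued; auto.
Qed.

Lemma solves_glued n0 : solves (A_glued n0) (u_glued n0).
Proof. intros x y t Ht; apply pde_lhs_glued; auto. Qed.

Lemma t_start_1 : t_start 1 = 0.
Proof. unfold t_start; simpl; ring. Qed.

Lemma c_coef_1 n0 : c_coef n0 1 = 1.
Proof. unfold c_coef, amp; rewrite t_start_1, Rminus_diag, !Rmult_0_r, exp_0; ring. Qed.

Lemma u_glued_origin n0 : u_glued n0 0 0 0 = 1.
Proof.
  destruct (glued_window_start n0 1 0 0 0) as [E _]; [lia | rewrite t_start_1; lra |].
  rewrite E, c_coef_1; unfold svar; simpl; rewrite !Rmult_0_r, cos_0, exp_0; ring.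
Qed.

Theorem mainTheorem7 :
  exists N : nat, forall n0 : nat, (N <= n0)%nat ->
  exists (A : matfun) (u : fun3) (c C : R) (tt cc : nat -> R),
    reg_class 80 60 A /\
    periodic_xy u /\ uniformly_C2 u /\
    (exists x y t, 0 <= t /\ u x y t <> 0) /\
    solves A u /\
    0 < c /\ 0 < C /\
    (exists T0, forall T, T0 <= T -> forall x y t, T <= t ->
        Rabs (u x y t) <= C * exp (- c * exp (c * T))) /\
    tt 1%nat = 0 /\ cc 1%nat = 1 /\
    (forall n, (1 <= n)%nat ->
        0 <= tt n /\ tt n < tt (S n) /\ tt (S n) - tt n > 3 / 100 /\ 0 < cc n) /\
    (forall M, exists n0', forall n, (n0' <= n)%nat -> M < tt n) /\
    (forall n, (1 <= n)%nat ->
       (exists f g : R -> R, uniformly_C2_1 f /\ uniformly_C2_1 g /\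
          forall x y t, tt n <= t <= tt (S n) ->
            u x y t = f t * cos (kk n0 n * svar n x y)
                      + g t * cos (kk n0 (S n) * svar (S n) x y)) /\
       (forall x y t, tt n <= t <= tt n + 1 / 100 ->
          u x y t = cc n * cos (kk n0 n * svar n x y) * exp (- kk n0 n * t)
          /\ A_id A x y t) /\
       (forall x y t, tt (S n) - 1 / 100 <= t <= tt (S n) ->
          u x y t = cc (S n) * cos (kk n0 (S n) * svar (S n) x y)
                    * exp (- kk n0 (S n) * t)
          /\ A_id A x y t)).
Proof.
  exists 10%nat; intros n0 Hn0.
  exists (A_glued n0), (u_glued n0), (1/10), 2, t_start, (c_coef n0).
  split; [apply reg_class_A_glued; auto |].
  split; [apply periodic_u_glued |].
  split; [apply uniformly_C2_u_glued; auto |].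
  split; [exists 0, 0, 0; rewrite u_glued_origin; lra |].
  split; [apply solves_glued |].
  split; [lra | split; [lra |]].
  split; [exists 5; intros; apply u_glued_decay; auto |].
  split; [apply t_start_1 | split; [apply c_coef_1 |]].
  split.
  { intros n Hn; rewrite t_start_S; generalize (t_start_ge0 n Hn); intros.
    repeat split; try lra; apply Rmult_lt_0_compat; apply exp_pos. }
  split; [apply t_start_unbounded |].
  intros n Hn; split; [| split; intros; [apply glued_window_start | apply glued_window_end]; auto].
  destruct (uniformly_C2_1_window_profiles (amp n0 n) (kk n0 n) (t_start n)) as [Uf Ug];
    auto using kk_ge_1000, amp_pos, t_start_ge0.
  do 2 eexists; split; [exact Uf | split; [exact Ug |]].
  intros; apply u_glued_modes; auto.
Qed.
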